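(* The relation $\equiv_1$ of $1$-equivalence on $2^\mathbb{N}$ is $\Pi^0_2$-graphable with diameter $2$.
   Context: Subsets of $\mathbb{N}$ are identified with elements of $2^\mathbb{N}$. $A\equiv_1 B$ means there is a computable bijection $f:\mathbb{N}\to\mathbb{N}$ with $n\in A\iff f(n)\in B$ for all $n$. An equivalence relation $E$ on a space $X$ is $\Gamma$-graphable (for a pointclass $\Gamma$, here lightface $\Pi^0_2$) if there is a simple undirected graph $G\subseteq X\times X$ in $\Gamma$ whose connectedness relation (connected by a finite path) equals $E$; it is $\Gamma$-graphable with diameter $k$ if such a $G$ exists in which $k$ is the least integer such that any two $G$-connected points are joined by a path of length at most $k$. *)

From Stdlib Require Import List Arith Relations.
Import ListNotations.

Inductive prf : Type :=
| PZero : prf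
| PSucc : prf
| PProj : nat -> prf               (* i-th argument (0 if absent) *)
| PComp : prf -> list prf -> prf
| PPrec : prf -> prf -> prf
| PMin  : prf -> prf.

Inductive eval : prf -> list nat -> nat -> Prop :=
| e_zero xs : eval PZero xs 0
| e_succ xs : eval PSucc xs (S (hd 0 xs))
| e_proj i xs : eval (PProj i) xs (nth i xs 0)
| e_comp f gs xs ys y : evals gs xs ys -> eval f ys y -> eval (PComp f gs) xs y
| e_prec0 f g xs y : eval f xs y -> eval (PPrec f g) (0 :: xs) y
| e_precS f g n xs r y :
    eval (PPrec f g) (n :: xs) r -> eval g (n :: r :: xs) y ->
    eval (PPrec f g) (S n :: xs) y
| e_min f xs y :
    eval f (y :: xs) 0 ->
    (forall z, z < y -> exists v, v <> 0 /\ eval f (z :: xs) v) ->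
    eval (PMin f) xs y
with evals : list prf -> list nat -> list nat -> Prop :=
| es_nil xs : evals [] xs []
| es_cons g gs xs y ys : eval g xs y -> evals gs xs ys -> evals (g :: gs) xs (y :: ys).

Definition computable (f : nat -> nat) : Prop :=
  exists c : prf, forall n, eval c [n] (f n).

Definition computable_rel3 (P : nat -> nat -> nat -> Prop) : Prop :=
  exists c : prf, forall a b d, exists v, eval c [a; b; d] v /\ (P a b d <-> v = 0).

Definition cantor := nat -> bool.

(** Code of the initial segment X|m (binary with a leading 1). *)
Fixpoint prefix_code (X : cantor) (m : nat) : nat :=
  match m with
  | 0 => 1
  | S m' => 2 * prefix_code X m' + (if X m' then 1 else 0)
  end.

Definition Pi02_rel (R : cantor -> cantor -> Prop) : Prop :=
  exists P, computable_rel3 P /\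
    forall X Y, R X Y <-> forall n, exists m, P n (prefix_code X m) (prefix_code Y m).

Definition one_equiv (A B : cantor) : Prop :=
  exists f : nat -> nat, computable f /\
    (exists g : nat -> nat, (forall n, g (f n) = n) /\ (forall n, f (g n) = n)) /\
    (forall n, A n = B (f n)).

Definition simple_graph {T} (G : T -> T -> Prop) : Prop :=
  (forall x y, G x y -> G y x) /\ (forall x, ~ G x x).

Definition connected {T} (G : T -> T -> Prop) : T -> T -> Prop :=
  clos_refl_trans T G.

Fixpoint path_le {T} (G : T -> T -> Prop) (k : nat) (x y : T) : Prop :=
  match k with
  | 0 => x = y
  | S k' => path_le G k' x y \/ exists z, path_le G k' x z /\ G z y
  end.

Definition has_diameter {T} (G : T -> T -> Prop) (k : nat) : Prop :=
  (forall x y, connected G x y -> path_le G k x y) /\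
  (forall j, (forall x y, connected G x y -> path_le G j x y) -> k <= j).

Definition Pi02_graphable_diam (E : cantor -> cantor -> Prop) (k : nat) : Prop :=
  exists G : cantor -> cantor -> Prop,
    Pi02_rel G /\ simple_graph G /\
    (forall X Y, connected G X Y <-> E X Y) /\
    has_diameter G k.

From Stdlib Require Import List Arith Lia Bool Cantor Relations.
From Stdlib Require Import Classical IndefiniteDescription FunctionalExtensionality.
Import ListNotations.

(** Join [Z <> W] when both are non-constant, their first flips (the first
    positions [rZ], [rW] where they differ from their first bit) satisfy
    [rZ + rW >= 3], and the program with some code [e <= H := 2 (rZ + rW)]
    computes a bijection [f] with [Z n = W (f n)] for [n >= H] that carries as
    many ones of [Z] below [H] as [W o f]. A permutation of [0..H-1] then
    repairs [f], so adjacent sets are 1-equivalent. Totality, bijectivity and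
    agreement of the program are Pi^0_2 through a Kleene T-predicate that
    checks coded evaluation traces; the search for [e] is bounded by data read
    off finite prefixes, so a pigeonhole argument moves it out of the
    forall-exists, and adjacency is Pi^0_2.

    If [X <> Y] are 1-equivalent via the program [c], rearranging a long
    initial segment of [X] into two blocks gives [Z] with the tail and the
    number of ones of [X] whose first flip exceeds the codes of [c] and of the
    identity; [Z] is then adjacent to (or equal to) both [X] and [Y]. The
    sequences [1010...] and [0101...] are 1-equivalent but have first flips
    [1 + 1 < 3], so the diameter is exactly 2. *)

(** * Recursive functions *)

Definition recursive (k : nat) (F : list nat -> nat) : Prop :=
  exists c, forall xs, length xs = k -> eval c xs (F xs).

Lemma recursive_ext k F G :
  (forall xs, length xs = k -> F xs = G xs) -> recursive k F -> recursive k G.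
Proof. intros H [c Hc]. exists c. intros xs Hl. rewrite <- H by auto. auto. Qed.

Lemma recursive_proj k i : recursive k (fun xs => nth i xs 0).
Proof. exists (PProj i). intros. constructor. Qed.

Lemma recursive_hd k G :
  recursive k (fun xs => nth 0 (G xs) 0) -> recursive k (fun xs => hd 0 (G xs)).
Proof. apply recursive_ext. intros xs _. now destruct (G xs). Qed.

Lemma recursive_nth_tl k i G :
  recursive k (fun xs => nth (S i) (G xs) 0) -> recursive k (fun xs => nth i (tl (G xs)) 0).
Proof. apply recursive_ext. intros xs _. destruct (G xs); [now destruct i | reflexivity]. Qed.

Lemma recursive_succ k A : recursive k A -> recursive k (fun xs => S (A xs)).
Proof.
  intros [c Hc]. exists (PComp PSucc [c]). intros xs Hl.
  econstructor; [constructor; [apply Hc; auto|constructor]|constructor].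
Qed.

Lemma recursive_const k n : recursive k (fun _ => n).
Proof.
  induction n as [|n IH]; [exists PZero; constructor|]. exact (recursive_succ _ _ IH).
Qed.

Lemma recursive_comp k m F (As : list (list nat -> nat)) :
  recursive m F -> length As = m -> Forall (recursive k) As ->
  recursive k (fun xs => F (map (fun A => A xs) As)).
Proof.
  intros [f Hf] Hl HAs.
  assert (Hgs : exists gs, forall xs, length xs = k -> evals gs xs (map (fun A => A xs) As)).
  { clear Hl. induction HAs as [|A As [g Hg] _ [gs Hgs]]; [exists nil; intros xs _; apply es_nil|].
    exists (g :: gs). intros xs Hxs. constructor; auto. }
  destruct Hgs as [gs Hgs]. exists (PComp f gs). intros xs Hxs.
  econstructor; [apply Hgs; auto|]. apply Hf. now rewrite length_map.
Qed.

Lemma evals_proj l xs : evals (map PProj l) xs (map (fun i => nth i xs 0) l).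
Proof. induction l; constructor; auto. constructor. Qed.

Lemma map_nth_seq j xs : map (fun i => nth i xs 0) (seq j (length xs - j)) = skipn j xs.
Proof.
  revert j. induction xs as [|x xs IH]; intros [|j]; simpl; auto.
  - f_equal. rewrite <- seq_shift, map_map. specialize (IH 0). rewrite Nat.sub_0_r in IH. exact IH.
  - rewrite <- seq_shift, map_map. apply IH.
Qed.

Lemma recursive_reindex k m F l :
  recursive m F -> length l = m -> recursive k (fun xs => F (map (fun i => nth i xs 0) l)).
Proof.
  intros [c Hc] Hl. exists (PComp c (map PProj l)). intros xs _.
  econstructor; [apply evals_proj|]. apply Hc. rewrite length_map; auto.
Qed.

Lemma recursive_skipn k j F :
  recursive k F -> recursive (j + k) (fun xs => F (skipn j xs)).
Proof.
  intros HF. eapply recursive_ext; [|apply (recursive_reindex (j + k) k F (seq j k) HF)].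
  - intros xs Hl. replace (seq j k) with (seq j (length xs - j)) by (f_equal; lia).
    now rewrite map_nth_seq.
  - apply length_seq.
Qed.

Lemma recursive_rect k B St N :
  recursive k B -> recursive (S (S k)) St -> recursive k N ->
  recursive k (fun xs => nat_rect (fun _ => nat) (B xs) (fun i r => St (i :: r :: xs)) (N xs)).
Proof.
  intros [b Hb] [s Hs] [n Hn].
  exists (PComp (PPrec b s) (n :: map PProj (seq 0 k))). intros xs Hl.
  assert (Hxs : evals (map PProj (seq 0 k)) xs xs).
  { pose proof (evals_proj (seq 0 (length xs - 0)) xs) as E.
    rewrite map_nth_seq, Nat.sub_0_r, Hl in E. exact E. }
  econstructor.
  - constructor; [apply Hn; auto | exact Hxs].
  - induction (N xs) as [|i IH]; simpl; [constructor; apply Hb; auto|].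
    econstructor; [apply IH|]. apply Hs. simpl. lia.
Qed.

Lemma recursive_app1 F k A :
  recursive 1 (fun v => F (nth 0 v 0)) -> recursive k A -> recursive k (fun xs => F (A xs)).
Proof. intros HF HA. apply (recursive_comp k 1 _ [A] HF eq_refl). auto. Qed.

Lemma recursive_app2 F k A B :
  recursive 2 (fun v => F (nth 0 v 0) (nth 1 v 0)) -> recursive k A -> recursive k B ->
  recursive k (fun xs => F (A xs) (B xs)).
Proof. intros HF HA HB. apply (recursive_comp k 2 _ [A; B] HF eq_refl). auto. Qed.

Lemma recursive_app4 F k A B C D :
  recursive 4 (fun v => F (nth 0 v 0) (nth 1 v 0) (nth 2 v 0) (nth 3 v 0)) ->
  recursive k A -> recursive k B -> recursive k C -> recursive k D ->
  recursive k (fun xs => F (A xs) (B xs) (C xs) (D xs)).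
Proof. intros HF HA HB HC HD. apply (recursive_comp k 4 _ [A; B; C; D] HF eq_refl). auto. Qed.

Lemma recursive_iter k F N A :
  recursive 1 (fun v => F (nth 0 v 0)) -> recursive k N -> recursive k A ->
  recursive k (fun xs => Nat.iter (N xs) F (A xs)).
Proof.
  intros HF HN HA.
  eapply recursive_ext; [|apply (recursive_rect k A (fun ys => F (nth 1 ys 0)) N HA)].
  - intros xs _. cbv beta. generalize (N xs) as n.
    induction n as [|n IH]; simpl; [reflexivity | f_equal; exact IH].
  - apply (recursive_app1 F _ _ HF), recursive_proj.
  - exact HN.
Qed.

Lemma recursive_add k A B : recursive k A -> recursive k B -> recursive k (fun xs => A xs + B xs).
Proof.
  apply recursive_app2.
  eapply recursive_ext; [|apply (recursive_iter 2 S (fun v => nth 0 v 0) (fun v => nth 1 v 0))].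
  - intros xs _. cbv beta. generalize (nth 0 xs 0) as n. induction n; simpl in *; lia.
  - apply recursive_succ, recursive_proj.
  - apply recursive_proj.
  - apply recursive_proj.
Qed.

Lemma recursive_mul k A B : recursive k A -> recursive k B -> recursive k (fun xs => A xs * B xs).
Proof.
  apply recursive_app2.
  eapply recursive_ext;
    [|apply (recursive_rect 2 (fun _ => 0) (fun ys => nth 3 ys 0 + nth 1 ys 0) (fun v => nth 0 v 0))].
  - intros xs _. cbv beta. generalize (nth 0 xs 0) as n. induction n; simpl in *; lia.
  - apply recursive_const.
  - apply recursive_add; apply recursive_proj.
  - apply recursive_proj.
Qed.

Lemma recursive_pred k A : recursive k A -> recursive k (fun xs => pred (A xs)).
Proof.
  apply recursive_app1.
  eapply recursive_ext;
    [|apply (recursive_rect 1 (fun _ => 0) (fun ys => nth 0 ys 0) (fun v => nth 0 v 0))].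
  - intros xs _. cbv beta. destruct (nth 0 xs 0); reflexivity.
  - apply recursive_const.
  - apply recursive_proj.
  - apply recursive_proj.
Qed.

Lemma recursive_sub k A B : recursive k A -> recursive k B -> recursive k (fun xs => A xs - B xs).
Proof.
  intros HA HB. eapply recursive_ext; [|apply (recursive_iter k pred B A)].
  - intros xs _. cbv beta. generalize (B xs) as n. induction n as [|n IH]; simpl; [lia | rewrite IH; lia].
  - apply recursive_pred, recursive_proj.
  - exact HB.
  - exact HA.
Qed.

Lemma recursive_if k B X Y :
  recursive k (fun xs => Nat.b2n (B xs)) -> recursive k X -> recursive k Y ->
  recursive k (fun xs => if B xs then X xs else Y xs).
Proof.
  intros HB HX HY.
  (* a recursion of length [0] or [1] is a case split *)
  eapply recursive_ext;
    [|apply (recursive_rect k X (fun ys => Y (skipn 2 ys)) (fun xs => 1 - Nat.b2n (B xs)) HX)].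
  - intros xs _. cbv beta. destruct (B xs); reflexivity.
  - apply (recursive_skipn k 2), HY.
  - apply recursive_sub; auto. apply recursive_const.
Qed.

Lemma recursive_eqb k A B :
  recursive k A -> recursive k B -> recursive k (fun xs => Nat.b2n (A xs =? B xs)).
Proof.
  intros HA HB.
  eapply recursive_ext; [|apply (recursive_sub k (fun _ => 1) (fun xs => (A xs - B xs) + (B xs - A xs)))].
  - intros xs _. cbv beta. destruct (Nat.eqb_spec (A xs) (B xs)); cbn [Nat.b2n]; lia.
  - apply recursive_const.
  - apply recursive_add; apply recursive_sub; auto.
Qed.

Lemma recursive_leb k A B :
  recursive k A -> recursive k B -> recursive k (fun xs => Nat.b2n (A xs <=? B xs)).
Proof.
  intros HA HB.
  eapply recursive_ext; [|apply (recursive_sub k (fun _ => 1) (fun xs => A xs - B xs))].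
  - intros xs _. cbv beta. destruct (Nat.leb_spec (A xs) (B xs)); cbn [Nat.b2n]; lia.
  - apply recursive_const.
  - apply recursive_sub; auto.
Qed.

Lemma recursive_ltb k A B :
  recursive k A -> recursive k B -> recursive k (fun xs => Nat.b2n (A xs <? B xs)).
Proof. intros HA HB. apply (recursive_leb k (fun xs => S (A xs))); auto. apply recursive_succ, HA. Qed.

Lemma recursive_andb k A B :
  recursive k (fun xs => Nat.b2n (A xs)) -> recursive k (fun xs => Nat.b2n (B xs)) ->
  recursive k (fun xs => Nat.b2n (A xs && B xs)).
Proof.
  intros HA HB. eapply recursive_ext; [|apply (recursive_mul k _ _ HA HB)].
  intros xs _. cbv beta. destruct (A xs), (B xs); reflexivity.
Qed.

Lemma recursive_negb k A :
  recursive k (fun xs => Nat.b2n (A xs)) -> recursive k (fun xs => Nat.b2n (negb (A xs))).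
Proof.
  intros HA. eapply recursive_ext; [|apply (recursive_sub k _ _ (recursive_const k 1) HA)].
  intros xs _. cbv beta. destruct (A xs); reflexivity.
Qed.

Lemma recursive_orb k A B :
  recursive k (fun xs => Nat.b2n (A xs)) -> recursive k (fun xs => Nat.b2n (B xs)) ->
  recursive k (fun xs => Nat.b2n (A xs || B xs)).
Proof.
  intros HA HB.
  eapply recursive_ext; [|apply (recursive_negb k _
    (recursive_andb k _ _ (recursive_negb k _ HA) (recursive_negb k _ HB)))].
  intros xs _. cbv beta. destruct (A xs), (B xs); reflexivity.
Qed.

Lemma recursive_eqb_bool k A B :
  recursive k (fun xs => Nat.b2n (A xs)) -> recursive k (fun xs => Nat.b2n (B xs)) ->
  recursive k (fun xs => Nat.b2n (Bool.eqb (A xs) (B xs))).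
Proof.
  intros HA HB. eapply recursive_ext; [|apply (recursive_eqb k _ _ HA HB)].
  intros xs _. cbv beta. destruct (A xs), (B xs); reflexivity.
Qed.

Lemma recursive_if_bool k B X Y :
  recursive k (fun xs => Nat.b2n (B xs)) -> recursive k (fun xs => Nat.b2n (X xs)) ->
  recursive k (fun xs => Nat.b2n (Y xs)) ->
  recursive k (fun xs => Nat.b2n (if B xs then X xs else Y xs)).
Proof.
  intros HB HX HY. eapply recursive_ext; [|apply (recursive_if k B _ _ HB HX HY)].
  intros xs _. cbv beta. destruct (B xs); reflexivity.
Qed.

Fixpoint exists_below (n : nat) (p : nat -> bool) : bool :=
  match n with 0 => false | S n => exists_below n p || p n end.

Fixpoint forall_below (n : nat) (p : nat -> bool) : bool :=
  match n with 0 => true | S n => forall_below n p && p n end.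

Fixpoint count_below (n : nat) (p : nat -> bool) : nat :=
  match n with 0 => 0 | S n => count_below n p + Nat.b2n (p n) end.

(** The least [i < n] with [p i], or [n] if there is none. *)
Fixpoint least_below (n : nat) (p : nat -> bool) : nat :=
  match n with
  | 0 => 0
  | S n => if least_below n p <? n then least_below n p else if p n then n else S n
  end.

Lemma exists_below_spec n p : exists_below n p = true <-> exists i, i < n /\ p i = true.
Proof.
  induction n as [|n IH]; simpl.
  - split; [discriminate | intros [i [Hi _]]; lia].
  - rewrite orb_true_iff, IH. split.
    + intros [[i [Hi Hp]] | Hp]; [exists i | exists n]; split; auto.
    + intros [i [Hi Hp]]. destruct (Nat.eq_dec i n) as [->|Hne]; [right; auto|].
      left. exists i. split; auto. lia.
Qed.

Lemma forall_below_spec n p : forall_below n p = true <-> forall i, i < n -> p i = true.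
Proof.
  induction n as [|n IH]; simpl.
  - split; auto. intros; lia.
  - rewrite andb_true_iff, IH. split.
    + intros [H Hn] i Hi. destruct (Nat.eq_dec i n) as [->|]; auto. apply H. lia.
    + intros H. split; auto.
Qed.

Lemma count_below_ext n p q : (forall i, i < n -> p i = q i) -> count_below n p = count_below n q.
Proof. induction n; intros H; simpl; auto. rewrite IHn, H; auto. Qed.

Lemma least_below_spec n p :
  least_below n p <= n /\ (forall j, j < least_below n p -> p j = false) /\
  (least_below n p < n -> p (least_below n p) = true).
Proof.
  induction n as [|n [H1 [H2 H3]]]; simpl; [split; [lia | split; intros; lia]|].
  destruct (Nat.ltb_spec (least_below n p) n); [split; [lia | split; auto]|].
  assert (E : least_below n p = n) by lia. rewrite E in *.
  destruct (p n) eqn:Hp; (split; [lia | split]); auto; [|lia].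
  intros j Hj. destruct (Nat.eq_dec j n) as [->|]; auto. apply H2. lia.
Qed.

Lemma least_below_eq n p i :
  i < n -> p i = true -> (forall j, j < i -> p j = false) -> least_below n p = i.
Proof.
  intros Hi Hp Hj. destruct (least_below_spec n p) as [_ [H2 H3]].
  destruct (lt_eq_lt_dec (least_below n p) i) as [[Hlt|]|Hgt]; auto.
  - rewrite Hj in H3 by exact Hlt. discriminate H3. lia.
  - rewrite H2 in Hp by exact Hgt. discriminate Hp.
Qed.

Lemma recursive_skip_second k (F : nat -> list nat -> nat) :
  recursive (S k) (fun ys => F (hd 0 ys) (tl ys)) ->
  recursive (S (S k)) (fun ys => F (hd 0 ys) (skipn 2 ys)).
Proof.
  intros HF. eapply recursive_ext; [|apply (recursive_reindex (S (S k)) _ _ (0 :: seq 2 k) HF)].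
  - intros ys Hl. cbv beta.
    assert (E : map (fun i => nth i ys 0) (seq 2 k) = skipn 2 ys).
    { replace k with (length ys - 2) by lia. apply map_nth_seq. }
    rewrite <- E. destruct ys; [discriminate | reflexivity].
  - simpl. now rewrite length_seq.
Qed.

Section BoundedOperators.

Variables (k : nat) (P : nat -> list nat -> bool) (N : list nat -> nat).
Hypothesis HP : recursive (S k) (fun ys => Nat.b2n (P (hd 0 ys) (tl ys))).
Hypothesis HN : recursive k N.

Let HP2 : recursive (S (S k)) (fun ys => Nat.b2n (P (hd 0 ys) (skipn 2 ys))).
Proof. exact (recursive_skip_second k (fun i xs => Nat.b2n (P i xs)) HP). Qed.

Lemma recursive_exists_below :
  recursive k (fun xs => Nat.b2n (exists_below (N xs) (fun i => P i xs))).
Proof.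
  eapply recursive_ext; [|apply (recursive_rect k (fun _ => 0)
    (fun ys => Nat.b2n (negb (nth 1 ys 0 =? 0) || P (hd 0 ys) (skipn 2 ys))) N)].
  - intros xs _. cbv beta. generalize (N xs) as n.
    induction n as [|n IH]; [reflexivity|]. cbn [nat_rect]. rewrite IH.
    simpl. now destruct (exists_below n _).
  - apply recursive_const.
  - apply recursive_orb; [|exact HP2].
    apply recursive_negb, recursive_eqb; [apply recursive_proj | apply recursive_const].
  - exact HN.
Qed.

Lemma recursive_forall_below :
  recursive k (fun xs => Nat.b2n (forall_below (N xs) (fun i => P i xs))).
Proof.
  eapply recursive_ext; [|apply (recursive_rect k (fun _ => 1)
    (fun ys => Nat.b2n (negb (nth 1 ys 0 =? 0) && P (hd 0 ys) (skipn 2 ys))) N)].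
  - intros xs _. cbv beta. generalize (N xs) as n.
    induction n as [|n IH]; [reflexivity|]. cbn [nat_rect]. rewrite IH.
    simpl. now destruct (forall_below n _).
  - apply recursive_const.
  - apply recursive_andb; [|exact HP2].
    apply recursive_negb, recursive_eqb; [apply recursive_proj | apply recursive_const].
  - exact HN.
Qed.

Lemma recursive_count_below : recursive k (fun xs => count_below (N xs) (fun i => P i xs)).
Proof.
  eapply recursive_ext; [|apply (recursive_rect k (fun _ => 0)
    (fun ys => nth 1 ys 0 + Nat.b2n (P (hd 0 ys) (skipn 2 ys))) N)].
  - intros xs _. cbv beta. generalize (N xs) as n.
    induction n as [|n IH]; [reflexivity|]. cbn [nat_rect]. now rewrite IH.
  - apply recursive_const.
  - apply recursive_add; [apply recursive_proj | exact HP2].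
  - exact HN.
Qed.

Lemma recursive_least_below : recursive k (fun xs => least_below (N xs) (fun i => P i xs)).
Proof.
  eapply recursive_ext; [|apply (recursive_rect k (fun _ => 0)
    (fun ys => if nth 1 ys 0 <? hd 0 ys then nth 1 ys 0
               else if P (hd 0 ys) (skipn 2 ys) then hd 0 ys else S (hd 0 ys)) N)].
  - intros xs _. cbv beta. generalize (N xs) as n.
    induction n as [|n IH]; [reflexivity|]. cbn [nat_rect]. now rewrite IH.
  - apply recursive_const.
  - apply recursive_if; [apply recursive_ltb; [|apply recursive_hd]|..];
      [apply recursive_proj .. | apply recursive_if; [exact HP2 | | apply recursive_succ];
      apply recursive_hd, recursive_proj].
  - exact HN.
Qed.

End BoundedOperators.

Ltac recursive_extra := fail.

(** [recursive_extra] is redefined below for each new operation. It is tried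
    early because [apply] would otherwise unfold an operation such as [cpair]
    and decompose its body. *)
Ltac solve_recursive :=
  repeat first
    [ apply recursive_const
    | apply recursive_proj
    | apply recursive_hd
    | apply recursive_nth_tl
    | recursive_extra
    | apply recursive_succ
    | apply recursive_exists_below
    | apply recursive_forall_below
    | apply recursive_least_below
    | apply recursive_count_below
    | apply recursive_iter
    | lazymatch goal with |- recursive _ (fun _ => Nat.b2n _) => fail | _ => apply recursive_if end
    | apply recursive_if_bool
    | apply recursive_eqb
    | apply recursive_leb
    | apply recursive_ltb
    | apply recursive_andb
    | apply recursive_orb
    | apply recursive_negb
    | apply recursive_eqb_bool
    | apply recursive_add
    | apply recursive_mul
    | apply recursive_sub
    | apply recursive_pred
    | progress cbv beta zeta ].

(** * Pairing and coded lists *)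

Definition cpair (x y : nat) : nat := Cantor.to_nat (x, y).
Definition cfst (n : nat) : nat := fst (Cantor.of_nat n).
Definition csnd (n : nat) : nat := snd (Cantor.of_nat n).

Lemma cfst_pair x y : cfst (cpair x y) = x.
Proof. unfold cfst, cpair. now rewrite Cantor.cancel_of_to. Qed.

Lemma csnd_pair x y : csnd (cpair x y) = y.
Proof. unfold csnd, cpair. now rewrite Cantor.cancel_of_to. Qed.

Lemma cpair_eta n : cpair (cfst n) (csnd n) = n.
Proof. unfold cfst, csnd, cpair. rewrite <- surjective_pairing. apply Cantor.cancel_to_of. Qed.

Lemma cpair_ge x y : x + y <= cpair x y.
Proof. unfold cpair. pose proof (Cantor.to_nat_non_decreasing x y). lia. Qed.

Lemma cfst_csnd_le n : cfst n + csnd n <= n.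
Proof. rewrite <- (cpair_eta n) at 3. apply cpair_ge. Qed.

Lemma recursive_cpair k A B :
  recursive k A -> recursive k B -> recursive k (fun xs => cpair (A xs) (B xs)).
Proof.
  apply recursive_app2.
  (* [Cantor.to_nat (x, y)] is [y] plus the sum of [i + 1] for [i < y + x] *)
  eapply recursive_ext; [|apply (recursive_add 2 (fun v => nth 1 v 0)
    (fun v => nat_rect (fun _ => nat) 0 (fun i r => S i + r) (nth 1 v 0 + nth 0 v 0)))].
  - reflexivity.
  - apply recursive_proj.
  - apply (recursive_rect 2 (fun _ => 0) (fun ys => S (hd 0 ys) + nth 1 ys 0));
      solve_recursive.
Qed.

Ltac recursive_extra ::= apply recursive_cpair.

Lemma cfst_least n : cfst n = least_below (S n) (fun x => exists_below (S n) (fun y => cpair x y =? n)).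
Proof.
  pose proof (cfst_csnd_le n). symmetry. apply least_below_eq; [lia| |].
  - apply exists_below_spec. exists (csnd n). rewrite cpair_eta, Nat.eqb_refl. split; auto. lia.
  - intros j Hj. apply not_true_iff_false. rewrite exists_below_spec.
    intros [y [_ Hy]]. apply Nat.eqb_eq in Hy. rewrite <- Hy, cfst_pair in Hj. lia.
Qed.

Lemma csnd_least n : csnd n = least_below (S n) (fun y => cpair (cfst n) y =? n).
Proof.
  pose proof (cfst_csnd_le n). symmetry. apply least_below_eq; [lia| |].
  - now rewrite cpair_eta, Nat.eqb_refl.
  - intros j Hj. apply Nat.eqb_neq. intros Hy. rewrite <- Hy, csnd_pair in Hj. lia.
Qed.

Lemma recursive_cfst k A : recursive k A -> recursive k (fun xs => cfst (A xs)).
Proof.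
  apply recursive_app1. eapply recursive_ext; [intros; symmetry; apply cfst_least|].
  solve_recursive.
Qed.

Lemma recursive_csnd k A : recursive k A -> recursive k (fun xs => csnd (A xs)).
Proof.
  apply recursive_app1. eapply recursive_ext; [intros; symmetry; apply csnd_least|].
  solve_recursive. apply recursive_cfst. solve_recursive.
Qed.

Fixpoint lcode (l : list nat) : nat :=
  match l with [] => 0 | x :: l => S (cpair x (lcode l)) end.

Definition lcons (x l : nat) : nat := S (cpair x l).
Definition lhd (n : nat) : nat := cfst (pred n).
Definition ltl (n : nat) : nat := csnd (pred n).
Definition lnth (i l : nat) : nat := lhd (Nat.iter i ltl l).
Definition llen (l : nat) : nat := least_below (S l) (fun k => Nat.iter k ltl l =? 0).

Lemma lhd_cons x l : lhd (lcons x l) = x.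
Proof. apply cfst_pair. Qed.

Lemma ltl_cons x l : ltl (lcons x l) = l.
Proof. apply csnd_pair. Qed.

Lemma lhd_le n : lhd n <= n.
Proof. unfold lhd. pose proof (cfst_csnd_le (pred n)). lia. Qed.

Lemma ltl_le n : ltl n <= n.
Proof. unfold ltl. pose proof (cfst_csnd_le (pred n)). lia. Qed.

Lemma lhd_lcode l : lhd (lcode l) = hd 0 l.
Proof. destruct l; [reflexivity | apply lhd_cons]. Qed.

Lemma ltl_lcode l : ltl (lcode l) = lcode (tl l).
Proof. destruct l; [reflexivity | apply ltl_cons]. Qed.

Lemma iter_ltl_lcode k l : Nat.iter k ltl (lcode l) = lcode (skipn k l).
Proof.
  induction k as [|k IH]; [reflexivity|].
  simpl. rewrite IH, ltl_lcode. exact (f_equal lcode (skipn_skipn 1 k l)).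
Qed.

Lemma lnth_lcode i l : lnth i (lcode l) = nth i l 0.
Proof.
  unfold lnth. rewrite iter_ltl_lcode, lhd_lcode.
  replace (nth i l 0) with (nth 0 (skipn i l) 0) by (rewrite nth_skipn; f_equal; lia).
  now destruct (skipn i l).
Qed.

Lemma lnth_le i l : lnth i l <= l.
Proof.
  unfold lnth. eapply Nat.le_trans; [apply lhd_le|].
  induction i; simpl; auto. pose proof (ltl_le (Nat.iter i ltl l)). lia.
Qed.

Lemma length_le_lcode l : length l <= lcode l.
Proof. induction l; simpl; auto. pose proof (cpair_ge a (lcode l)). lia. Qed.

Lemma llen_lcode l : llen (lcode l) = length l.
Proof.
  unfold llen. pose proof (length_le_lcode l). apply least_below_eq; [lia| |].
  - rewrite iter_ltl_lcode, skipn_all. reflexivity.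
  - intros j Hj. rewrite iter_ltl_lcode. apply Nat.eqb_neq.
    destruct (skipn j l) eqn:E; [|discriminate]. apply skipn_all_iff in E. lia.
Qed.

Lemma lcode_surj n : exists l, lcode l = n.
Proof.
  induction n as [[|n] IH] using lt_wf_ind; [now exists []|].
  pose proof (cfst_csnd_le n). destruct (IH (csnd n)) as [l Hl]; [lia|].
  exists (cfst n :: l). simpl. now rewrite Hl, cpair_eta.
Qed.

Lemma recursive_lcons k A B :
  recursive k A -> recursive k B -> recursive k (fun xs => lcons (A xs) (B xs)).
Proof. intros. apply recursive_succ, recursive_cpair; auto. Qed.

Lemma recursive_lhd k A : recursive k A -> recursive k (fun xs => lhd (A xs)).
Proof. intros. apply recursive_cfst, recursive_pred; auto. Qed.

Lemma recursive_ltl k A : recursive k A -> recursive k (fun xs => ltl (A xs)).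
Proof. intros. apply recursive_csnd, recursive_pred; auto. Qed.

Lemma recursive_lnth k A B :
  recursive k A -> recursive k B -> recursive k (fun xs => lnth (A xs) (B xs)).
Proof.
  intros. apply recursive_lhd, recursive_iter; auto. apply recursive_ltl, recursive_proj.
Qed.

Lemma recursive_llen k A : recursive k A -> recursive k (fun xs => llen (A xs)).
Proof.
  apply recursive_app1. unfold llen. solve_recursive. apply recursive_ltl, recursive_proj.
Qed.

Ltac recursive_extra ::= first
  [ apply recursive_lnth | apply recursive_llen | apply recursive_lcons | apply recursive_lhd
  | apply recursive_ltl | apply recursive_cfst | apply recursive_csnd | apply recursive_cpair ].

(** * Program codes and a Kleene T-predicate *)

Fixpoint eval_functional c xs y (d : eval c xs y) {struct d} :
  forall y', eval c xs y' -> y = y'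
with evals_functional gs xs ys (d : evals gs xs ys) {struct d} :
  forall ys', evals gs xs ys' -> ys = ys'.
Proof.
  - destruct d as [| | | f gs xs ys y Hgs Hf | f g xs y Hf | f g n xs r y Hr Hg | f xs y Hf Hz];
      intros y' d'; inversion d'; subst; auto.
    + assert (ys = ys0) as <- by (eapply evals_functional; eauto). eapply eval_functional; eauto.
    + eapply eval_functional; eauto.
    + assert (r = r0) as <- by (eapply eval_functional; eauto). eapply eval_functional; eauto.
    + destruct (lt_eq_lt_dec y y') as [[Hlt|]|Hlt]; auto; exfalso.
      * match goal with H : forall z, z < y' -> _ |- _ => destruct (H y Hlt) as [v [Hv Hev]] end.
        exact (Hv (eq_sym (eval_functional _ _ _ Hf _ Hev))).
      * destruct (Hz y' Hlt) as [v [Hv Hev]].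
        match goal with H : eval f (y' :: xs) 0 |- _ => exact (Hv (eval_functional _ _ _ Hev _ H)) end.
  - destruct d as [xs | g gs xs y ys Hg Hgs]; intros ys' d'; inversion d'; subst; auto.
    f_equal; [eapply eval_functional | eapply evals_functional]; eauto.
Qed.

Fixpoint pcode (c : prf) : nat :=
  match c with
  | PZero => cpair 0 0
  | PSucc => cpair 1 0
  | PProj i => cpair 2 i
  | PComp f gs => cpair 3 (cpair (pcode f) (lcode (map pcode gs)))
  | PPrec f g => cpair 4 (cpair (pcode f) (pcode g))
  | PMin f => cpair 5 (pcode f)
  end.

(** Tags above [5] are read as [PMin], so that every number codes a program. *)
Inductive decodes : prf -> nat -> Prop :=
| decodes_zero e : cfst e = 0 -> decodes PZero e
| decodes_succ e : cfst e = 1 -> decodes PSucc e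
| decodes_proj e : cfst e = 2 -> decodes (PProj (csnd e)) e
| decodes_comp e f gs : cfst e = 3 -> decodes f (cfst (csnd e)) ->
    length gs = llen (csnd (csnd e)) ->
    (forall k, k < length gs -> decodes (nth k gs PZero) (lnth k (csnd (csnd e)))) ->
    decodes (PComp f gs) e
| decodes_prec e f g : cfst e = 4 -> decodes f (cfst (csnd e)) -> decodes g (csnd (csnd e)) ->
    decodes (PPrec f g) e
| decodes_min e f : 5 <= cfst e -> decodes f (csnd e) -> decodes (PMin f) e.

Fixpoint decodes_pcode c : decodes c (pcode c).
Proof.
  destruct c as [| |i|f gs|f g|f]; simpl.
  - constructor. apply cfst_pair.
  - constructor. apply cfst_pair.
  - rewrite <- (csnd_pair 2 i) at 1. constructor. apply cfst_pair.
  - apply decodes_comp; repeat rewrite ?cfst_pair, ?csnd_pair; [reflexivity | apply decodes_pcode | |].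
    + now rewrite llen_lcode, length_map.
    + intros k _. rewrite lnth_lcode.
      replace (nth k (map pcode gs) 0) with (pcode (nth k gs PZero))
        by (rewrite <- (map_nth pcode gs PZero k); reflexivity).
      (* a local fixpoint keeps the call on [g] structurally guarded *)
      revert k. refine ((fix pcode_nth (gs : list prf) (k : nat) :
          decodes (nth k gs PZero) (pcode (nth k gs PZero)) := match gs, k with
        | g :: _, 0 => decodes_pcode g
        | _ :: gs, S k => pcode_nth gs k
        | [], _ => _ end) gs). destruct k; constructor; apply cfst_pair.
  - apply decodes_prec; repeat rewrite ?cfst_pair, ?csnd_pair; [reflexivity | apply decodes_pcode ..].
  - apply decodes_min; repeat rewrite ?cfst_pair, ?csnd_pair; [lia | apply decodes_pcode].
Qed.

Lemma finite_choice {A} (d : A) (R : nat -> A -> Prop) n :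
  (forall k, k < n -> exists a, R k a) -> exists l, length l = n /\ forall k, k < n -> R k (nth k l d).
Proof.
  induction n as [|n IH]; intros H; [exists []; split; auto; intros; lia|].
  destruct IH as [l [Hl Hk]]; [intros; apply H; lia|].
  destruct (H n) as [a Ha]; [lia|]. exists (l ++ [a]). rewrite length_app, Hl. split; [simpl; lia|].
  intros k Hk'. destruct (Nat.eq_dec k n) as [->|].
  - rewrite app_nth2, Hl, Nat.sub_diag by lia. exact Ha.
  - rewrite app_nth1 by lia. apply Hk. lia.
Qed.

Lemma decodes_total e : exists c, decodes c e.
Proof.
  induction e as [e IH] using lt_wf_ind.
  pose proof (cfst_csnd_le e) as He. pose proof (cfst_csnd_le (csnd e)) as Hb.
  destruct (cfst e) as [|[|[|[|[|t]]]]] eqn:Ht.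
  - exists PZero. now constructor.
  - exists PSucc. now constructor.
  - exists (PProj (csnd e)). now constructor.
  - destruct (IH (cfst (csnd e))) as [f Hf]; [lia|].
    destruct (finite_choice PZero (fun k c => decodes c (lnth k (csnd (csnd e)))) (llen (csnd (csnd e))))
      as [gs [Hl Hgs]].
    { intros k _. apply IH. pose proof (lnth_le k (csnd (csnd e))). lia. }
    exists (PComp f gs). constructor; auto. intros k Hk. apply Hgs. lia.
  - destruct (IH (cfst (csnd e))) as [f Hf]; [lia|].
    destruct (IH (csnd (csnd e))) as [g Hg]; [lia|].
    exists (PPrec f g). now constructor.
  - destruct (IH (csnd e)) as [f Hf]; [lia|].
    exists (PMin f). constructor; auto. lia.
Qed.

(** Codes the judgment "program [e] maps the coded argument list [xs] to [y]". *)
Definition judgment (e xs y : nat) : nat := cpair e (cpair xs y).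
Definition jcode (J : nat) : nat := cfst J.
Definition jargs (J : nat) : nat := cfst (csnd J).
Definition jval (J : nat) : nat := csnd (csnd J).

Lemma jcode_judgment e xs y : jcode (judgment e xs y) = e.
Proof. apply cfst_pair. Qed.

Lemma jargs_judgment e xs y : jargs (judgment e xs y) = xs.
Proof. unfold jargs, judgment. now rewrite csnd_pair, cfst_pair. Qed.

Lemma jval_judgment e xs y : jval (judgment e xs y) = y.
Proof. unfold jval, judgment. now rewrite !csnd_pair. Qed.

Definition exists_before (t : nat -> nat) (i : nat) (p : nat -> bool) : bool :=
  exists_below i (fun j => p (t j)).

(** Entry [i] of the trace [t] follows from earlier entries by one rule of [eval]. *)
Definition justified (t : nat -> nat) (i : nat) : bool :=
  let e := jcode (t i) in let xs := jargs (t i) in let y := jval (t i) in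
  let b := csnd e in
  if cfst e =? 0 then y =? 0
  else if cfst e =? 1 then y =? S (lhd xs)
  else if cfst e =? 2 then y =? lnth b xs
  else if cfst e =? 3 then
    exists_before t i (fun J =>
      (jcode J =? cfst b) && (jval J =? y) && (llen (jargs J) =? llen (csnd b)) &&
      forall_below (llen (csnd b)) (fun k => exists_before t i (fun J' =>
        (jcode J' =? lnth k (csnd b)) && (jargs J' =? xs) && (jval J' =? lnth k (jargs J)))))
  else if cfst e =? 4 then
    negb (xs =? 0) &&
    if lhd xs =? 0 then
      exists_before t i (fun J => (jcode J =? cfst b) && (jargs J =? ltl xs) && (jval J =? y))
    else
      exists_before t i (fun J => exists_before t i (fun J' =>
        (jcode J =? e) && (jargs J =? lcons (pred (lhd xs)) (ltl xs)) &&
        (jcode J' =? csnd b) && (jargs J' =? lcons (pred (lhd xs)) (lcons (jval J) (ltl xs))) &&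
        (jval J' =? y)))
  else
    exists_before t i (fun J => (jcode J =? b) && (jargs J =? lcons y xs) && (jval J =? 0)) &&
    forall_below y (fun z => exists_before t i (fun J =>
      (jcode J =? b) && (jargs J =? lcons z xs) && negb (jval J =? 0))).

Definition valid_trace (t : list nat) : Prop :=
  forall i, i < length t -> justified (fun j => nth j t 0) i = true.

Definition derivable (J : nat) : Prop := exists t, valid_trace t /\ In J t.

Definition holds (J : nat) : Prop :=
  forall c xs, decodes c (jcode J) -> jargs J = lcode xs -> eval c xs (jval J).

Lemma exists_before_spec t i p :
  exists_before t i p = true <-> exists j, j < i /\ p (t j) = true.
Proof. apply exists_below_spec. Qed.

Lemma evals_nth gs xs ys :
  length gs = length ys -> (forall k, k < length gs -> eval (nth k gs PZero) xs (nth k ys 0)) ->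
  evals gs xs ys.
Proof.
  revert ys; induction gs as [|g gs IH]; intros [|y ys] Hl H; simpl in *; try discriminate; constructor.
  - apply (H 0). lia.
  - apply IH; [lia|]. intros k Hk. apply (H (S k)). lia.
Qed.

Ltac split_checks := repeat match goal with
  | H : (_ && _) = true |- _ => apply andb_prop in H as [? ?]
  | H : (_ =? _) = true |- _ => apply Nat.eqb_eq in H
  | H : negb _ = true |- _ => apply negb_true_iff in H
  | H : (_ =? _) = false |- _ => apply Nat.eqb_neq in H
  | H : exists_before _ _ _ = true |- _ => apply exists_before_spec in H as [? [? ?]]
  end.

Lemma justified_holds t i :
  (forall j, j < i -> holds (t j)) -> justified t i = true -> holds (t i).
Proof.
  intros IH Hj c xs Hc Hxs. unfold justified in Hj. cbv zeta in Hj. rewrite Hxs in Hj.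
  set (e := jcode (t i)) in *. set (y := jval (t i)) in *. clearbody e y.
  destruct (Nat.eqb_spec (cfst e) 0) as [H0|H0].
  { split_checks. subst y. inversion Hc; subst; try lia. constructor. }
  destruct (Nat.eqb_spec (cfst e) 1) as [H1|H1].
  { split_checks. subst y. inversion Hc; subst; try lia. rewrite lhd_lcode. constructor. }
  destruct (Nat.eqb_spec (cfst e) 2) as [H2|H2].
  { split_checks. subst y. inversion Hc; subst; try lia. rewrite lnth_lcode. constructor. }
  destruct (Nat.eqb_spec (cfst e) 3) as [H3|H3].
  { apply exists_before_spec in Hj as (j & Hji & Hj). split_checks.
    inversion Hc as [| | |? f gs ? Hf Hlen Hgs| |]; subst; try lia.
    destruct (lcode_surj (jargs (t j))) as [ys Hys].
    apply (e_comp _ _ _ ys).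
    - apply evals_nth; [now rewrite Hlen, <- Hys, llen_lcode in *|].
      intros k Hk. match goal with H : forall_below _ _ = true |- _ =>
        apply forall_below_spec with (i := k) in H; [|lia] end.
      split_checks. rewrite <- lnth_lcode, Hys. subst.
      match goal with H : jval (t ?j') = _ |- _ => rewrite <- H; apply IH; auto end.
      match goal with H : jcode (t ?j') = _ |- _ => rewrite H; auto end.
    - subst. apply IH; auto. match goal with H : jcode (t j) = _ |- _ => now rewrite H end. }
  destruct (Nat.eqb_spec (cfst e) 4) as [H4|H4].
  { split_checks. inversion Hc as [| | | |? f g ? Hf Hg|]; subst; try lia.
    destruct xs as [|[|n] xs]; [simpl in *; lia| |];
      rewrite lhd_lcode, ltl_lcode in *; simpl in *; split_checks.
    - constructor. subst. apply IH; auto.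
      match goal with H : jcode (t _) = _ |- _ => now rewrite H end.
    - match goal with
      | Hj1 : jcode (t ?j1) = e, Hj2 : jcode (t ?j2) = csnd (csnd e) |- _ =>
        apply (e_precS _ _ _ _ (jval (t j1))); [|subst y];
        [apply (IH j1) | apply (IH j2)]; auto; [rewrite Hj1 | rewrite Hj2]; auto
      end. }
  split_checks. inversion Hc as [| | | | |? f ? Hf]; subst; try lia. constructor.
  - match goal with Hj : jcode (t ?j) = csnd e, Hv : jval (t ?j) = 0 |- _ =>
      rewrite <- Hv; apply (IH j); auto; now rewrite Hj end.
  - intros z Hz. match goal with H : forall_below _ _ = true |- _ =>
      apply forall_below_spec with (i := z) in H; auto end.
    split_checks. match goal with Hj : jcode (t ?j) = csnd e, Hv : jval (t ?j) <> 0 |- _ =>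
      exists (jval (t j)); split; auto; apply (IH j); auto; now rewrite Hj end.
Qed.

Lemma valid_trace_sound t : valid_trace t -> forall i, i < length t -> holds (nth i t 0).
Proof.
  intros Ht i. induction i as [i IH] using lt_wf_ind. intros Hi.
  apply (justified_holds (fun j => nth j t 0)); [intros j Hj; apply IH; lia | auto].
Qed.

Lemma exists_before_mono t t' i i' (p p' : nat -> bool) :
  (forall j, j < i -> exists j', j' < i' /\ t' j' = t j) -> (forall J, p J = true -> p' J = true) ->
  exists_before t i p = true -> exists_before t' i' p' = true.
Proof.
  intros Ht Hp H. apply exists_before_spec in H as [j [Hj H]].
  destruct (Ht j Hj) as [j' [Hj' E]]. apply exists_before_spec. exists j'. rewrite E. auto.
Qed.

Lemma justified_mono t t' i i' :
  (forall j, j < i -> exists j', j' < i' /\ t' j' = t j) -> t' i' = t i ->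
  justified t i = true -> justified t' i' = true.
Proof.
  intros Ht Hi. unfold justified. cbv zeta. rewrite Hi.
  assert (andb_mono : forall a b a' b' : bool,
    (a = true -> a' = true) -> (b = true -> b' = true) -> a && b = true -> a' && b' = true).
  { intros [] [] [] []; simpl; auto. }
  assert (forall_mono : forall n p p', (forall k, p k = true -> p' k = true) ->
    forall_below n p = true -> forall_below n p' = true).
  { intros n p p' H. rewrite !forall_below_spec. auto. }
  repeat match goal with |- context [if ?b then _ else _] => destruct b end;
    repeat first [ apply andb_mono | apply forall_mono | apply exists_before_mono; [exact Ht|]
                 | intro ]; auto.
Qed.

Lemma valid_trace_app t1 t2 : valid_trace t1 -> valid_trace t2 -> valid_trace (t1 ++ t2).
Proof.
  intros H1 H2 i Hi. rewrite length_app in Hi. destruct (Nat.lt_ge_cases i (length t1)).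
  - apply (justified_mono (fun j => nth j t1 0) _ i); auto.
    + intros j Hj. exists j. split; [lia|]. apply app_nth1. lia.
    + now apply app_nth1.
  - apply (justified_mono (fun j => nth j t2 0) _ (i - length t1)); [| |apply H2; lia].
    + intros j Hj. exists (length t1 + j). split; [lia|].
      rewrite app_nth2 by lia. f_equal. lia.
    + now apply app_nth2.
Qed.

Lemma valid_trace_snoc t J :
  valid_trace t -> justified (fun j => nth j (t ++ [J]) 0) (length t) = true -> valid_trace (t ++ [J]).
Proof.
  intros Ht HJ i Hi. rewrite length_app in Hi. simpl in Hi.
  destruct (Nat.lt_ge_cases i (length t)); [|now replace i with (length t) by lia].
  apply (justified_mono (fun j => nth j t 0) _ i); auto.
  - intros j Hj. exists j. split; [lia|]. apply app_nth1. lia.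
  - now apply app_nth1.
Qed.

Lemma exists_before_in t M J (p : nat -> bool) :
  In J t -> p J = true -> exists_before (fun j => nth j (t ++ M) 0) (length t) p = true.
Proof.
  intros HJ Hp. apply In_nth with (d := 0) in HJ as [j [Hj E]].
  apply exists_before_spec. exists j. split; auto. now rewrite app_nth1, E.
Qed.

Lemma derivable_all Js : Forall derivable Js -> exists t, valid_trace t /\ incl Js t.
Proof.
  induction 1 as [|J Js [t1 [H1 HJ]] _ [t2 [H2 HJs]]].
  - exists []. split; [intros i Hi; simpl in Hi; lia | apply incl_nil_l].
  - exists (t1 ++ t2). split; [now apply valid_trace_app|].
    apply incl_cons; [apply in_or_app; auto | now apply incl_appr].
Qed.

Lemma derivable_step Js J : Forall derivable Js ->
  (forall t, incl Js t -> justified (fun j => nth j (t ++ [J]) 0) (length t) = true) -> derivable J.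
Proof.
  intros HJs HJ. destruct (derivable_all Js HJs) as [t [Ht Hinc]].
  exists (t ++ [J]). split; [now apply valid_trace_snoc, HJ | apply in_or_app; simpl; auto].
Qed.

Ltac unfold_new_entry :=
  unfold justified; cbv zeta; rewrite nth_middle, jcode_judgment, jargs_judgment, jval_judgment.

Ltac close_checks :=
  repeat (apply andb_true_intro; split);
  rewrite ?jcode_judgment, ?jargs_judgment, ?jval_judgment; apply Nat.eqb_eq; reflexivity.

Lemma derivable_zero e xs : cfst e = 0 -> derivable (judgment e xs 0).
Proof.
  intros Ht. apply (derivable_step []); [constructor|]. intros t _. unfold_new_entry. now rewrite Ht.
Qed.

Lemma derivable_succ e xs : cfst e = 1 -> derivable (judgment e (lcode xs) (S (hd 0 xs))).
Proof.
  intros Ht. apply (derivable_step []); [constructor|]. intros t _. unfold_new_entry.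
  rewrite Ht, lhd_lcode. apply Nat.eqb_refl.
Qed.

Lemma derivable_proj e xs : cfst e = 2 -> derivable (judgment e (lcode xs) (nth (csnd e) xs 0)).
Proof.
  intros Ht. apply (derivable_step []); [constructor|]. intros t _. unfold_new_entry.
  rewrite Ht, lnth_lcode. apply Nat.eqb_refl.
Qed.

Lemma derivable_comp e xs ys y :
  cfst e = 3 -> llen (csnd (csnd e)) = length ys ->
  derivable (judgment (cfst (csnd e)) (lcode ys) y) ->
  (forall k, k < length ys ->
     derivable (judgment (lnth k (csnd (csnd e))) (lcode xs) (nth k ys 0))) ->
  derivable (judgment e (lcode xs) y).
Proof.
  intros Ht Hlen Hf Hgs.
  set (G k := judgment (lnth k (csnd (csnd e))) (lcode xs) (nth k ys 0)).
  apply (derivable_step (judgment (cfst (csnd e)) (lcode ys) y :: map G (seq 0 (length ys)))).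
  { constructor; auto. apply Forall_map, Forall_forall. intros k Hk%in_seq. apply Hgs. lia. }
  intros t Hinc. unfold_new_entry. rewrite Ht. cbn [Nat.eqb].
  apply (exists_before_in _ _ (judgment (cfst (csnd e)) (lcode ys) y)); [apply Hinc; now left|].
  rewrite jargs_judgment, llen_lcode, Hlen. apply andb_true_intro. split; [close_checks|].
  apply forall_below_spec. intros k Hk.
  apply (exists_before_in _ _ (G k)); [apply Hinc; right; apply in_map, in_seq; lia|].
  unfold G. rewrite lnth_lcode. close_checks.
Qed.

Lemma derivable_prec0 e xs y :
  cfst e = 4 -> derivable (judgment (cfst (csnd e)) (lcode xs) y) ->
  derivable (judgment e (lcode (0 :: xs)) y).
Proof.
  intros Ht Hf. apply (derivable_step [judgment (cfst (csnd e)) (lcode xs) y]); [auto|].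
  intros t Hinc. unfold_new_entry. rewrite Ht, lhd_lcode, ltl_lcode. cbn [Nat.eqb negb andb lcode hd pred].
  apply (exists_before_in _ _ (judgment (cfst (csnd e)) (lcode xs) y)); [apply Hinc; now left|].
  close_checks.
Qed.

Lemma derivable_precS e n xs r y :
  cfst e = 4 -> derivable (judgment e (lcode (n :: xs)) r) ->
  derivable (judgment (csnd (csnd e)) (lcode (n :: r :: xs)) y) ->
  derivable (judgment e (lcode (S n :: xs)) y).
Proof.
  intros Ht Hr Hg.
  apply (derivable_step [judgment e (lcode (n :: xs)) r; judgment (csnd (csnd e)) (lcode (n :: r :: xs)) y]);
    [auto|].
  intros t Hinc. unfold_new_entry. rewrite Ht, lhd_lcode, ltl_lcode. cbn [Nat.eqb negb andb lcode hd pred].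
  apply (exists_before_in _ _ (judgment e (lcode (n :: xs)) r)); [apply Hinc; now left|].
  apply (exists_before_in _ _ (judgment (csnd (csnd e)) (lcode (n :: r :: xs)) y));
    [apply Hinc; right; now left|].
  close_checks.
Qed.

Lemma derivable_min e xs y :
  5 <= cfst e -> derivable (judgment (csnd e) (lcode (y :: xs)) 0) ->
  (forall z, z < y -> exists v, v <> 0 /\ derivable (judgment (csnd e) (lcode (z :: xs)) v)) ->
  derivable (judgment e (lcode xs) y).
Proof.
  intros Ht H0 Hz.
  destruct (finite_choice 0 (fun z v => v <> 0 /\ derivable (judgment (csnd e) (lcode (z :: xs)) v)) y Hz)
    as [vs [_ Hvs]].
  set (G z := judgment (csnd e) (lcode (z :: xs)) (nth z vs 0)).
  apply (derivable_step (judgment (csnd e) (lcode (y :: xs)) 0 :: map G (seq 0 y))).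
  { constructor; auto. apply Forall_map, Forall_forall. intros z Hz'%in_seq. apply Hvs. lia. }
  intros t Hinc. unfold_new_entry.
  destruct (cfst e) as [|[|[|[|[|]]]]]; try lia. cbn [Nat.eqb]. apply andb_true_intro. split.
  - apply (exists_before_in _ _ (judgment (csnd e) (lcode (y :: xs)) 0)); [apply Hinc; now left|].
    close_checks.
  - apply forall_below_spec. intros z Hz'.
    apply (exists_before_in _ _ (G z)); [apply Hinc; right; apply in_map, in_seq; lia|].
    unfold G. rewrite jcode_judgment, jargs_judgment, jval_judgment, !Nat.eqb_refl.
    destruct (Hvs z Hz') as [Hv _]. now destruct (nth z vs 0).
Qed.

Fixpoint eval_derivable c xs y (d : eval c xs y) {struct d} :
  forall e, decodes c e -> derivable (judgment e (lcode xs) y)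
with evals_derivable gs xs ys (d : evals gs xs ys) {struct d} :
  forall r, (forall k, k < length gs -> decodes (nth k gs PZero) (r k)) ->
  length ys = length gs /\
  forall k, k < length gs -> derivable (judgment (r k) (lcode xs) (nth k ys 0)).
Proof.
  - destruct d as [xs | xs | i xs | f gs xs ys y Hgs Hf | f g xs y Hf | f g n xs r y Hr Hg | f xs y Hf Hz];
      intros e Hc; inversion Hc as [|e' Ht|e' Ht|e' f' gs' Ht Hcf Hlen Hcgs|e' f' g' Ht Hcf Hcg|e' f' Ht Hcf];
      subst.
    + now apply derivable_zero.
    + now apply derivable_succ.
    + now apply derivable_proj.
    + destruct (evals_derivable _ _ _ Hgs _ Hcgs) as [Hl Hd].
      apply (derivable_comp _ _ ys); [assumption | lia | exact (eval_derivable _ _ _ Hf _ Hcf) |].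
      intros k Hk. apply Hd. lia.
    + apply derivable_prec0; [assumption | exact (eval_derivable _ _ _ Hf _ Hcf)].
    + apply (derivable_precS _ _ _ r);
        [assumption | exact (eval_derivable _ _ _ Hr _ Hc) | exact (eval_derivable _ _ _ Hg _ Hcg)].
    + apply derivable_min; [assumption | exact (eval_derivable _ _ _ Hf _ Hcf) |].
      intros z Hzy. destruct (Hz z Hzy) as [v [Hv Hev]].
      exists v. split; [assumption | exact (eval_derivable _ _ _ Hev _ Hcf)].
  - destruct d as [xs | g gs xs y ys Hg Hgs]; intros r Hr;
      [split; [reflexivity | intros k Hk; simpl in Hk; lia]|].
    destruct (evals_derivable _ _ _ Hgs (fun k => r (S k))) as [Hl Hd];
      [intros k Hk; apply (Hr (S k)); simpl; lia|].
    split; [simpl; lia|]. intros [|k] Hk; simpl.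
    + apply (eval_derivable _ _ _ Hg). apply (Hr 0). simpl; lia.
    + apply Hd. simpl in Hk; lia.
Qed.

Definition valid_code (t : nat) : bool := forall_below (llen t) (justified (fun j => lnth j t)).

Lemma valid_code_lcode t : valid_code (lcode t) = true <-> valid_trace t.
Proof.
  unfold valid_code, valid_trace. rewrite forall_below_spec, llen_lcode.
  assert (E : forall i, justified (fun j => lnth j (lcode t)) i = justified (fun j => nth j t 0) i).
  { intros i. apply eq_true_iff_eq.
    split; apply justified_mono; try (intros j Hj; exists j); now rewrite lnth_lcode. }
  split; intros H i Hi; specialize (H i Hi); now rewrite E in *.
Qed.

(** Kleene's T-predicate, with [m] bounding the code of the trace. *)
Definition computes_within (e x y m : nat) : bool :=
  exists_below m (fun t => valid_code t &&
    exists_below (llen t) (fun j => lnth j t =? judgment e (lcode [x]) y)).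

Lemma computes_within_sound e x y m c :
  computes_within e x y m = true -> decodes c e -> eval c [x] y.
Proof.
  intros H Hc. apply exists_below_spec in H as [n [_ H]]. apply andb_prop in H as [Hv H].
  destruct (lcode_surj n) as [t <-]. apply valid_code_lcode in Hv.
  apply exists_below_spec in H as [j [Hj E]]. apply Nat.eqb_eq in E.
  rewrite llen_lcode in Hj. rewrite lnth_lcode in E.
  pose proof (valid_trace_sound t Hv j Hj c [x]) as S. unfold holds in S.
  rewrite E, jcode_judgment, jargs_judgment, jval_judgment in S. auto.
Qed.

Lemma computes_within_mono e x y m m' :
  m <= m' -> computes_within e x y m = true -> computes_within e x y m' = true.
Proof.
  unfold computes_within. rewrite !exists_below_spec. intros Hm [n [Hn H]]. exists n. split; auto. lia.
Qed.

Lemma computes_within_complete c e x y :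
  eval c [x] y -> decodes c e -> exists m, computes_within e x y m = true.
Proof.
  intros H Hc. destruct (eval_derivable _ _ _ H _ Hc) as [t [Ht HJ]].
  exists (S (lcode t)). apply exists_below_spec. exists (lcode t). split; [lia|].
  apply andb_true_intro. split; [now apply valid_code_lcode|].
  apply In_nth with (d := 0) in HJ as [j [Hj E]]. apply exists_below_spec.
  exists j. rewrite llen_lcode, lnth_lcode, E. split; auto. apply Nat.eqb_refl.
Qed.

Lemma recursive_computes_within k A B C D :
  recursive k A -> recursive k B -> recursive k C -> recursive k D ->
  recursive k (fun xs => Nat.b2n (computes_within (A xs) (B xs) (C xs) (D xs))).
Proof.
  apply (recursive_app4 (fun a b c d => Nat.b2n (computes_within a b c d))).
  unfold computes_within, valid_code, justified, exists_before, judgment. solve_recursive.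
Qed.

Ltac recursive_extra ::= first
  [ apply recursive_computes_within
  | apply recursive_lnth | apply recursive_llen | apply recursive_lcons | apply recursive_lhd
  | apply recursive_ltl | apply recursive_cfst | apply recursive_csnd | apply recursive_cpair ].

(** * Prefix codes *)

Lemma div2_least n : Nat.div2 n = least_below (S n) (fun q => n <? 2 * q + 2).
Proof.
  symmetry. pose proof (Nat.div2_odd n) as E. destruct (Nat.odd n); simpl in E.
  all: apply least_below_eq; [lia | apply Nat.ltb_lt; lia | intros j Hj; apply Nat.ltb_ge; lia].
Qed.

Lemma recursive_div2 k A : recursive k A -> recursive k (fun xs => Nat.div2 (A xs)).
Proof.
  apply recursive_app1. eapply recursive_ext; [intros; symmetry; apply div2_least|]. solve_recursive.
Qed.

Lemma recursive_odd k A : recursive k A -> recursive k (fun xs => Nat.b2n (Nat.odd (A xs))).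
Proof.
  apply (recursive_app1 (fun n => Nat.b2n (Nat.odd n))).
  eapply recursive_ext; [|apply (recursive_negb 1 (fun v => nth 0 v 0 =? 2 * Nat.div2 (nth 0 v 0)))].
  - intros xs _. cbv beta. set (n := nth 0 xs 0). pose proof (Nat.div2_odd n) as E.
    destruct (Nat.odd n); simpl in E;
      [rewrite (proj2 (Nat.eqb_neq _ _)) by lia | rewrite (proj2 (Nat.eqb_eq _ _)) by lia]; reflexivity.
  - apply recursive_eqb; [apply recursive_proj|].
    apply recursive_mul; [apply recursive_const | apply recursive_div2, recursive_proj].
Qed.

Lemma div2_b2n p b : Nat.div2 (2 * p + Nat.b2n b) = p.
Proof.
  destruct b; simpl;
    [rewrite Nat.add_1_r; apply Nat.div2_succ_double | rewrite Nat.add_0_r; apply Nat.div2_double].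
Qed.

Lemma odd_b2n p b : Nat.odd (2 * p + Nat.b2n b) = b.
Proof. destruct b; simpl; [apply Nat.odd_odd | rewrite Nat.add_0_r; apply Nat.odd_even]. Qed.

(** [prefix_code X m] is [1] followed by the bits [X 0 ... X (m-1)] in binary,
    so its length is its number of halvings down to [1]. *)
Definition prefix_length (a : nat) : nat := least_below (S a) (fun k => Nat.iter k Nat.div2 a <=? 1).
Definition prefix_bit (a i : nat) : bool := Nat.odd (Nat.iter (prefix_length a - 1 - i) Nat.div2 a).

Lemma prefix_code_S X m : prefix_code X (S m) = 2 * prefix_code X m + Nat.b2n (X m).
Proof. reflexivity. Qed.

Lemma prefix_code_ge X m : S m <= prefix_code X m.
Proof. induction m; simpl; [lia|]. destruct (X m); lia. Qed.

Lemma iter_div2_prefix_code X m k : k <= m -> Nat.iter k Nat.div2 (prefix_code X m) = prefix_code X (m - k).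
Proof.
  induction k as [|k IH]; intros Hk; [simpl; f_equal; lia|].
  simpl. rewrite IH by lia. replace (m - k) with (S (m - S k)) by lia.
  rewrite prefix_code_S. apply div2_b2n.
Qed.

Lemma prefix_length_code X m : prefix_length (prefix_code X m) = m.
Proof.
  pose proof (prefix_code_ge X m). apply least_below_eq; [lia| |].
  - rewrite iter_div2_prefix_code, Nat.sub_diag by lia. reflexivity.
  - intros j Hj. rewrite iter_div2_prefix_code by lia. apply Nat.leb_gt.
    pose proof (prefix_code_ge X (m - j)). lia.
Qed.

Lemma prefix_bit_code X m i : i < m -> prefix_bit (prefix_code X m) i = X i.
Proof.
  intros Hi. unfold prefix_bit. rewrite prefix_length_code, iter_div2_prefix_code by lia.
  replace (m - (m - 1 - i)) with (S i) by lia. rewrite prefix_code_S. apply odd_b2n.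
Qed.

Lemma recursive_prefix_length k A : recursive k A -> recursive k (fun xs => prefix_length (A xs)).
Proof.
  apply recursive_app1. unfold prefix_length. solve_recursive. apply recursive_div2, recursive_proj.
Qed.

Lemma recursive_prefix_bit k A B :
  recursive k A -> recursive k B -> recursive k (fun xs => Nat.b2n (prefix_bit (A xs) (B xs))).
Proof.
  apply (recursive_app2 (fun a i => Nat.b2n (prefix_bit a i))). unfold prefix_bit.
  apply recursive_odd, recursive_iter; [apply recursive_div2, recursive_proj| |solve_recursive].
  apply recursive_sub; [apply recursive_sub; [apply recursive_prefix_length|]|]; solve_recursive.
Qed.

Ltac recursive_extra ::= first
  [ apply recursive_prefix_bit | apply recursive_prefix_length | apply recursive_odd
  | apply recursive_div2 | apply recursive_computes_within
  | apply recursive_lnth | apply recursive_llen | apply recursive_lcons | apply recursive_lhd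
  | apply recursive_ltl | apply recursive_cfst | apply recursive_csnd | apply recursive_cpair ].

Definition first_flip (X : cantor) (r : nat) : Prop := X r <> X 0 /\ forall i, i < r -> X i = X 0.

Lemma first_flip_unique X r r' : first_flip X r -> first_flip X r' -> r = r'.
Proof.
  intros [H1 H2] [H1' H2']. destruct (lt_eq_lt_dec r r') as [[H|]|H]; auto; exfalso.
  - exact (H1 (H2' r H)). - exact (H1' (H2 r' H)).
Qed.

Lemma first_flip_exists X i : X i <> X 0 -> exists r, first_flip X r.
Proof.
  intros Hi. set (p j := negb (Bool.eqb (X j) (X 0))).
  destruct (least_below_spec (S i) p) as [Hle [Hb Hr]]. exists (least_below (S i) p).
  assert (Hpi : p i = true) by (unfold p; now destruct (X i), (X 0)).
  assert (Hlt : least_below (S i) p < S i).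
  { destruct (Nat.eq_dec (least_below (S i) p) (S i)) as [E|]; [|lia].
    rewrite Hb in Hpi by lia. discriminate. }
  specialize (Hr Hlt). set (r := least_below (S i) p) in *. clearbody r. unfold p in Hr, Hb. split.
  - intros E. rewrite E in Hr. now destruct (X 0).
  - intros j Hj. specialize (Hb j Hj). now destruct (X j), (X 0).
Qed.

(** * The graph and its Pi^0_2 definition *)

Definition witnesses (e : nat) (Z W : cantor) (H : nat) : Prop :=
  exists c f, decodes c e /\ (forall x, eval c [x] (f x)) /\
    (forall x x', f x = f x' -> x = x') /\ (forall y, exists x, f x = y) /\
    (forall n, H <= n -> Z n = W (f n)) /\ count_below H Z = count_below H (fun i => W (f i)).

Definition adjacent_from (Z W : cantor) : Prop :=
  (exists i, Z i <> W i) /\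
  exists rz rw, first_flip Z rz /\ first_flip W rw /\ 3 <= rz + rw /\
    exists e, e <= 2 * (rz + rw) /\ witnesses e Z W (2 * (rz + rw)).

Definition adjacent (Z W : cantor) : Prop := adjacent_from Z W \/ adjacent_from W Z.

(** Finite approximation of [witnesses e Z W H] read off the prefix codes
    [a] and [b] of length [m], for arguments up to [n]. *)
Definition witness_check (a b e n m H : nat) : bool :=
  let T x y := computes_within e x y m in
  (n <? m) && (H <=? m) &&
  forall_below (S n) (fun x => exists_below m (fun y => T x y)) &&
  forall_below (S n) (fun x => forall_below (S n) (fun x' => forall_below m (fun y =>
    forall_below m (fun y' => negb (T x y && T x' y' && negb (x =? x') && (y =? y')))))) &&
  forall_below (S n) (fun y => exists_below m (fun x => T x y)) &&
  forall_below (S n) (fun x => (x <? H) ||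
    forall_below m (fun y => negb (T x y) || Bool.eqb (prefix_bit a x) (prefix_bit b y))) &&
  forall_below H (fun x => exists_below m (fun y => T x y)) &&
  (count_below H (prefix_bit a) =? count_below H (fun x => exists_below m (fun y => T x y && prefix_bit b y))).

Definition witness_facts (a b e n m H : nat) : Prop :=
  let T x y := computes_within e x y m = true in
  n < m /\ H <= m /\
  (forall x, x <= n -> exists y, y < m /\ T x y) /\
  (forall x x' y y', x <= n -> x' <= n -> y < m -> y' < m -> T x y -> T x' y' -> x <> x' -> y <> y') /\
  (forall y, y <= n -> exists x, x < m /\ T x y) /\
  (forall x y, x <= n -> H <= x -> y < m -> T x y -> prefix_bit a x = prefix_bit b y) /\
  (forall x, x < H -> exists y, y < m /\ T x y) /\
  count_below H (prefix_bit a) =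
    count_below H (fun x => exists_below m (fun y => computes_within e x y m && prefix_bit b y)).

Lemma witness_check_facts a b e n m H :
  witness_check a b e n m H = true -> witness_facts a b e n m H.
Proof.
  unfold witness_check, witness_facts. cbv zeta. intros Hc.
  apply andb_prop in Hc as [Hc Hcount]; apply andb_prop in Hc as [Hc HtotH];
  apply andb_prop in Hc as [Hc Hagree]; apply andb_prop in Hc as [Hc Honto];
  apply andb_prop in Hc as [Hc Hinj]; apply andb_prop in Hc as [Hc Htot];
  apply andb_prop in Hc as [Hn HH].
  rewrite forall_below_spec in Htot, Hinj, Honto, Hagree, HtotH.
  repeat split; [now apply Nat.ltb_lt | now apply Nat.leb_le | | | | | | now apply Nat.eqb_eq].
  - intros x Hx. apply exists_below_spec, Htot. lia.
  - intros x x' y y' Hx Hx' Hy Hy' T1 T2 Hne <-.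
    specialize (Hinj x ltac:(lia)). rewrite forall_below_spec in Hinj.
    specialize (Hinj x' ltac:(lia)). rewrite forall_below_spec in Hinj.
    specialize (Hinj y Hy). rewrite forall_below_spec in Hinj. specialize (Hinj y Hy).
    rewrite T1, T2, Nat.eqb_refl, (proj2 (Nat.eqb_neq _ _) Hne) in Hinj. discriminate.
  - intros y Hy. apply exists_below_spec, Honto. lia.
  - intros x y Hx Hx' Hy T. specialize (Hagree x ltac:(lia)).
    apply orb_prop in Hagree as [Hlt|Hall]; [apply Nat.ltb_lt in Hlt; lia|].
    rewrite forall_below_spec in Hall. specialize (Hall y Hy). rewrite T in Hall. now apply eqb_prop.
  - intros x Hx. apply exists_below_spec. auto.
Qed.

Lemma witness_facts_check a b e n m H :
  witness_facts a b e n m H -> witness_check a b e n m H = true.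
Proof.
  unfold witness_check, witness_facts. cbv zeta.
  intros (Hn & HH & Htot & Hinj & Honto & Hagree & HtotH & Hcount).
  apply andb_true_intro; split; [|now apply Nat.eqb_eq].
  apply andb_true_intro; split;
    [|apply forall_below_spec; intros x Hx; apply exists_below_spec; auto].
  apply andb_true_intro; split.
  2:{ apply forall_below_spec. intros x Hx. destruct (Nat.ltb_spec x H); auto.
      apply forall_below_spec. intros y Hy.
      destruct (computes_within e x y m) eqn:T; auto. simpl.
      rewrite (Hagree x y); auto; [apply eqb_reflx | lia]. }
  apply andb_true_intro; split;
    [|apply forall_below_spec; intros y Hy; apply exists_below_spec, Honto; lia].
  apply andb_true_intro; split.
  2:{ apply forall_below_spec. intros x Hx. apply forall_below_spec. intros x' Hx'.
      apply forall_below_spec. intros y Hy. apply forall_below_spec. intros y' Hy'.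
      destruct (computes_within e x y m) eqn:T1, (computes_within e x' y' m) eqn:T2; auto.
      destruct (Nat.eqb_spec x x'); auto. simpl. apply negb_true_iff, Nat.eqb_neq.
      apply (Hinj x x'); auto; lia. }
  apply andb_true_intro; split;
    [|apply forall_below_spec; intros x Hx; apply exists_below_spec, Htot; lia].
  apply andb_true_intro; split; [now apply Nat.ltb_lt | now apply Nat.leb_le].
Qed.

Lemma witness_check_spec a b e n m H : witness_check a b e n m H = true <-> witness_facts a b e n m H.
Proof. split; [apply witness_check_facts | apply witness_facts_check]. Qed.

Lemma witness_check_antitone a b e n n' m H :
  n' <= n -> witness_check a b e n m H = true -> witness_check a b e n' m H = true.
Proof.
  rewrite !witness_check_spec. intros Hle (Hn & HH & Htot & Hinj & Honto & Hagree & HtotH & Hcount).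
  repeat split; auto; [lia | intros; apply Htot | intros x x' y y' ?????; apply Hinj
                      | intros; apply Honto | intros x y ???; apply Hagree]; auto; lia.
Qed.

Lemma eventually_below (P : nat -> nat -> Prop) N :
  (forall x, x < N -> exists m, P x m) -> (forall x m m', m <= m' -> P x m -> P x m') ->
  exists M, forall x m, x < N -> M <= m -> P x m.
Proof.
  intros H Hm. induction N as [|N IH]; [exists 0; intros; lia|].
  destruct IH as [M HM]; [intros; apply H; lia|].
  destruct (H N) as [M' HM']; [lia|]. exists (M + M'). intros x m Hx Hle.
  destruct (Nat.eq_dec x N) as [->|]; [apply (Hm _ M'); auto; lia | apply HM; lia].
Qed.

Lemma witnesses_check Z W e H : witnesses e Z W H ->
  forall n, exists M, forall m, M <= m -> witness_check (prefix_code Z m) (prefix_code W m) e n m H = true.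
Proof.
  intros (c & f & Hc & Hf & Hinj & Hsurj & Htail & Hcount) n.
  assert (Hval : forall x y m, computes_within e x y m = true -> y = f x)
    by (intros x y m T; exact (eval_functional _ _ _ (computes_within_sound _ _ _ _ _ T Hc) _ (Hf x))).
  destruct (eventually_below (fun x m => computes_within e x (f x) m = true /\ f x < m /\ x < m /\
      exists x', x' < m /\ computes_within e x' x m = true) (S (n + H))) as [M HM].
  { intros x _. destruct (computes_within_complete c e x (f x) (Hf x) Hc) as [m1 T1].
    destruct (Hsurj x) as [x' Ex']. destruct (computes_within_complete c e x' (f x') (Hf x') Hc) as [m2 T2].
    exists (m1 + m2 + f x + x + x' + 1). repeat split; try lia.
    - eapply computes_within_mono; [|eauto]; lia.
    - exists x'. split; [lia|]. rewrite <- Ex'. eapply computes_within_mono; [|eauto]; lia. }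
  { intros x m m' Hle (T & H1 & H2 & x' & H3 & T'). repeat split; try lia.
    - eapply computes_within_mono; eauto.
    - exists x'. split; [lia|]. eapply computes_within_mono; eauto. }
  exists (M + S (n + H)). intros m Hm. apply witness_check_spec. repeat split; try lia.
  - intros x Hx. destruct (HM x m) as [T [Hfx _]]; try lia. exists (f x); auto.
  - intros x x' y y' _ _ _ _ T1 T2 Hne E. apply Hval in T1, T2. subst. auto.
  - intros y Hy. destruct (HM y m) as (_ & _ & _ & x' & Hx' & T); try lia. exists x'; auto.
  - intros x y Hx HHx Hy T. apply Hval in T. subst. rewrite !prefix_bit_code by lia. auto.
  - intros x Hx. destruct (HM x m) as [T [Hfx _]]; try lia. exists (f x); auto.
  - rewrite (count_below_ext H _ Z) by (intros; apply prefix_bit_code; lia).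
    rewrite Hcount. apply count_below_ext. intros i Hi.
    destruct (HM i m) as [T [Hfx _]]; [lia..|].
    destruct (W (f i)) eqn:EW; symmetry.
    + apply exists_below_spec. exists (f i). split; auto. now rewrite T, prefix_bit_code.
    + apply not_true_iff_false. rewrite exists_below_spec. intros (y & Hy & B).
      apply andb_prop in B as [T' B]. apply Hval in T'. subst. rewrite prefix_bit_code in B; congruence.
Qed.

Lemma check_witnesses Z W e H :
  (forall n, exists m, witness_check (prefix_code Z m) (prefix_code W m) e n m H = true) ->
  witnesses e Z W H.
Proof.
  intros HC. destruct (decodes_total e) as [c Hc].
  assert (Hfacts : forall n, exists m, witness_facts (prefix_code Z m) (prefix_code W m) e n m H)
    by (intros n; destruct (HC n) as [m Hm]; exists m; now apply witness_check_spec).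
  clear HC.
  assert (Htot : forall x, exists y, eval c [x] y).
  { intros x. destruct (Hfacts x) as (m & _ & _ & Htot & _).
    destruct (Htot x (le_n _)) as [y [_ T]]. exists y. eapply computes_within_sound; eauto. }
  destruct (functional_choice _ Htot) as [f Hf].
  assert (Hval : forall x y m, computes_within e x y m = true -> y = f x)
    by (intros x y m T; exact (eval_functional _ _ _ (computes_within_sound _ _ _ _ _ T Hc) _ (Hf x))).
  exists c, f. repeat split; auto.
  - intros x x' E. destruct (Nat.eq_dec x x') as [|Hne]; auto. exfalso.
    destruct (Hfacts (x + x')) as (m & _ & _ & Htot' & Hinj & _).
    destruct (Htot' x ltac:(lia)) as [y [Hy T]]. destruct (Htot' x' ltac:(lia)) as [y' [Hy' T']].
    apply (Hinj x x' y y'); auto; try lia. now rewrite (Hval _ _ _ T), (Hval _ _ _ T').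
  - intros y. destruct (Hfacts y) as (m & _ & _ & _ & _ & Honto & _).
    destruct (Honto y (le_n _)) as [x [_ T]]. exists x. symmetry. eapply Hval; eauto.
  - intros n Hn. destruct (Hfacts n) as (m & Hnm & _ & Htot' & _ & _ & Hagree & _).
    destruct (Htot' n (le_n _)) as [y [Hy T]]. rewrite <- (Hval _ _ _ T).
    rewrite <- (prefix_bit_code Z m n), <- (prefix_bit_code W m y) by auto. apply (Hagree n); auto.
  - destruct (Hfacts 0) as (m & _ & HHm & _ & _ & _ & _ & HtotH & Hcount).
    rewrite (count_below_ext H Z (prefix_bit (prefix_code Z m)))
      by (intros; rewrite prefix_bit_code; auto; lia).
    rewrite Hcount. apply count_below_ext. intros i Hi. destruct (HtotH i Hi) as [y [Hy T]].
    pose proof (Hval _ _ _ T). subst y. destruct (W (f i)) eqn:EW.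
    + apply exists_below_spec. exists (f i). split; auto. now rewrite T, prefix_bit_code.
    + apply not_true_iff_false. rewrite exists_below_spec. intros (y & Hy' & B).
      apply andb_prop in B as [T' B]. apply Hval in T'. subst. rewrite prefix_bit_code in B; congruence.
Qed.

Definition first_flip_below (a m : nat) : nat :=
  least_below m (fun i => negb (Bool.eqb (prefix_bit a i) (prefix_bit a 0))).

Lemma first_flip_below_code X m r : first_flip X r -> r < m -> first_flip_below (prefix_code X m) m = r.
Proof.
  intros [H1 H2] Hr. apply least_below_eq; auto.
  - rewrite !prefix_bit_code by lia. now destruct (X r), (X 0).
  - intros j Hj. rewrite !prefix_bit_code, H2 by lia. now rewrite eqb_reflx.
Qed.

Lemma first_flip_below_spec X m :
  first_flip_below (prefix_code X m) m < m -> first_flip X (first_flip_below (prefix_code X m) m).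
Proof.
  unfold first_flip_below. destruct (least_below_spec m (fun i =>
    negb (Bool.eqb (prefix_bit (prefix_code X m) i) (prefix_bit (prefix_code X m) 0)))) as [_ [Hb Hr]].
  intros Hlt. specialize (Hr Hlt). set (r := least_below m _) in *. clearbody r.
  rewrite !prefix_bit_code in Hr by lia. split.
  - intros E. rewrite E, eqb_reflx in Hr. discriminate.
  - intros i Hi. specialize (Hb i Hi). rewrite !prefix_bit_code in Hb by lia.
    now apply negb_false_iff, eqb_prop in Hb.
Qed.

(** The parity of [l] chooses the orientation of the edge and [Nat.div2 l] its witness. *)
Definition oriented_check (a b l n m H : nat) : bool :=
  if Nat.odd l then witness_check b a (Nat.div2 l) n m H else witness_check a b (Nat.div2 l) n m H.

Definition adjacency_check (n a b : nat) : bool :=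
  let m := prefix_length a in
  let rz := first_flip_below a m in let rw := first_flip_below b m in
  exists_below m (fun i => negb (Bool.eqb (prefix_bit a i) (prefix_bit b i))) &&
  (rz <? m) && (rw <? m) && (3 <=? rz + rw) &&
  exists_below (S (2 * (2 * (rz + rw)) + 1)) (fun l => oriented_check a b l n m (2 * (rz + rw))).

Lemma adjacency_check_spec X Y n m :
  adjacency_check n (prefix_code X m) (prefix_code Y m) = true <->
  (exists i, i < m /\ X i <> Y i) /\
  exists rz rw, first_flip X rz /\ first_flip Y rw /\ rz < m /\ rw < m /\ 3 <= rz + rw /\
    exists l, l <= 2 * (2 * (rz + rw)) + 1 /\
      oriented_check (prefix_code X m) (prefix_code Y m) l n m (2 * (rz + rw)) = true.
Proof.
  unfold adjacency_check. cbv zeta. rewrite !prefix_length_code. split.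
  - intros Hc. apply andb_prop in Hc as [Hc Hl]; apply andb_prop in Hc as [Hc H3];
      apply andb_prop in Hc as [Hc Hw]; apply andb_prop in Hc as [Hd Hz].
    apply Nat.ltb_lt in Hz, Hw. apply Nat.leb_le in H3. split.
    + apply exists_below_spec in Hd as [i [Hi E]]. exists i. split; auto.
      rewrite !prefix_bit_code in E by lia. intros E'. now rewrite E', eqb_reflx in E.
    + apply exists_below_spec in Hl as [l [Hl Hc]].
      do 2 eexists. refine (conj (first_flip_below_spec _ _ Hz) (conj (first_flip_below_spec _ _ Hw)
        (conj Hz (conj Hw (conj H3 (ex_intro _ l (conj _ Hc))))))). lia.
  - intros [(i & Hi & E) (rz & rw & Hz & Hw & Hzm & Hwm & H3 & l & Hl & Hc)].
    rewrite (first_flip_below_code X m rz), (first_flip_below_code Y m rw) by auto.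
    repeat (apply andb_true_intro; split).
    + apply exists_below_spec. exists i. split; auto. rewrite !prefix_bit_code by lia.
      now destruct (X i), (Y i).
    + now apply Nat.ltb_lt.
    + now apply Nat.ltb_lt.
    + now apply Nat.leb_le.
    + apply exists_below_spec. exists l. split; auto. lia.
Qed.

Lemma recursive_adjacency_check :
  recursive 3 (fun v => Nat.b2n (adjacency_check (nth 0 v 0) (nth 1 v 0) (nth 2 v 0))).
Proof. unfold adjacency_check, oriented_check, witness_check, first_flip_below. solve_recursive. Qed.

Lemma exists_below_forall (Q : nat -> nat -> Prop) B :
  (forall l n n', n' <= n -> Q l n -> Q l n') ->
  (forall n, exists l, l < B /\ Q l n) -> exists l, l < B /\ forall n, Q l n.
Proof.
  revert Q. induction B as [|B IH]; intros Q Hanti H; [destruct (H 0) as [l [Hl _]]; lia|].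
  destruct (classic (forall n, Q B n)) as [HB|HB]; [exists B; auto|].
  apply not_all_ex_not in HB as [n0 Hn0].
  destruct (IH (fun l n => Q l (n + n0))) as [l [Hl Hr]].
  - intros l n n' Hle. apply Hanti. lia.
  - intros n. destruct (H (n + n0)) as [l [Hl Hr]]. exists l. split; auto.
    destruct (Nat.eq_dec l B) as [->|]; [|lia]. exfalso. apply Hn0. eapply Hanti; [|eauto]. lia.
  - exists l. split; [lia|]. intros n. eapply Hanti; [|apply (Hr n)]. lia.
Qed.

Lemma adjacent_from_checks X Y rz rw l :
  first_flip X rz -> first_flip Y rw -> 3 <= rz + rw -> (exists i, X i <> Y i) ->
  l <= 2 * (2 * (rz + rw)) + 1 ->
  (forall n, exists m, oriented_check (prefix_code X m) (prefix_code Y m) l n m (2 * (rz + rw)) = true) ->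
  adjacent X Y.
Proof.
  intros Hz Hw H3 [i Hi] Hl HC. unfold oriented_check in HC.
  pose proof (Nat.div2_odd l) as El. destruct (Nat.odd l); simpl in El.
  - right. split; [exists i; auto|]. exists rw, rz. rewrite (Nat.add_comm rw).
    refine (conj Hw (conj Hz (conj _ (ex_intro _ (Nat.div2 l) (conj _ _))))); [lia | lia |].
    now apply check_witnesses.
  - left. split; [exists i; auto|]. exists rz, rw.
    refine (conj Hz (conj Hw (conj H3 (ex_intro _ (Nat.div2 l) (conj _ _))))); [lia |].
    now apply check_witnesses.
Qed.

Lemma adjacent_iff_checks X Y :
  adjacent X Y <-> forall n, exists m, adjacency_check n (prefix_code X m) (prefix_code Y m) = true.
Proof.
  split.
  - intros [(Hd & rz & rw & Hz & Hw & H3 & e & He & Hg) | (Hd & rw & rz & Hw & Hz & H3 & e & He & Hg)] n;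
      destruct Hd as [i Hi]; destruct (witnesses_check _ _ _ _ Hg n) as [M HM];
      exists (M + i + rz + rw + 1); apply adjacency_check_spec;
      (split; [exists i; split; auto; lia|]); exists rz, rw;
      (split; [auto | split; [auto | split; [lia | split; [lia | split; [lia |]]]]]).
    + exists (2 * e). split; [lia|]. unfold oriented_check.
      rewrite Nat.odd_even, Nat.div2_double. apply HM. lia.
    + exists (2 * e + 1). split; [lia|]. unfold oriented_check.
      rewrite Nat.odd_odd, Nat.div2_odd', (Nat.add_comm rz). apply HM. lia.
  - intros HC. destruct (HC 0) as [m0 Hm0]. apply adjacency_check_spec in Hm0.
    destruct Hm0 as [(i & _ & Hi) (rz & rw & Hz & Hw & _ & _ & H3 & _)].
    destruct (exists_below_forall (fun l n => exists m,
        oriented_check (prefix_code X m) (prefix_code Y m) l n m (2 * (rz + rw)) = true)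
        (S (2 * (2 * (rz + rw)) + 1))) as [l [Hl Hr]].
    + intros l n n' Hle [m Hm]. exists m. unfold oriented_check in *.
      destruct (Nat.odd l); eapply witness_check_antitone; eauto.
    + intros n. destruct (HC n) as [m Hm]. apply adjacency_check_spec in Hm.
      destruct Hm as [_ (rz' & rw' & Hz' & Hw' & _ & _ & _ & l & Hl & Hc)].
      rewrite (first_flip_unique _ _ _ Hz' Hz), (first_flip_unique _ _ _ Hw' Hw) in *.
      exists l. split; [lia|]. exists m. auto.
    + apply (adjacent_from_checks X Y rz rw l); auto. exists i. auto. lia.
Qed.

Lemma adjacent_Pi02 : Pi02_rel adjacent.
Proof.
  exists (fun n a b => adjacency_check n a b = true). split; [|apply adjacent_iff_checks].
  destruct (recursive_sub 3 (fun _ => 1) _ (recursive_const 3 1) recursive_adjacency_check) as [c Hc].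
  exists c. intros a b d. exists (1 - Nat.b2n (adjacency_check a b d)).
  split; [apply (Hc [a; b; d]); reflexivity|]. now destruct (adjacency_check a b d).
Qed.

(** * Adjacent sets are 1-equivalent *)

Lemma computable_recursive f : computable f <-> recursive 1 (fun v => f (nth 0 v 0)).
Proof.
  split; intros [c Hc]; exists c.
  - intros [|x [|y xs]] Hl; try discriminate. apply Hc.
  - intros n. exact (Hc [n] eq_refl).
Qed.

Lemma computable_comp f h : computable f -> computable h -> computable (fun n => h (f n)).
Proof. rewrite !computable_recursive. intros Hf Hh. now apply (recursive_app1 h). Qed.

Lemma computable_inverse f g :
  computable f -> (forall n, g (f n) = n) -> (forall n, f (g n) = n) -> computable g.
Proof.
  rewrite computable_recursive. intros Hf Hgf Hfg.
  assert (Hd : recursive 2 (fun v => Nat.b2n (negb (f (nth 0 v 0) =? nth 1 v 0)))).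
  { apply recursive_negb, recursive_eqb; [apply (recursive_app1 f); auto|]; apply recursive_proj. }
  destruct Hd as [d Hd]. exists (PMin d). intros m. constructor.
  - pose proof (Hd [g m; m] eq_refl) as D. simpl in D. now rewrite Hfg, Nat.eqb_refl in D.
  - intros z Hz. eexists. split; [|apply (Hd [z; m]); reflexivity].
    simpl. destruct (Nat.eqb_spec (f z) m) as [<-|]; simpl; [rewrite Hgf in Hz; lia | lia].
Qed.

Lemma computable_eventually_id p H : (forall n, H <= n -> p n = n) -> computable p.
Proof.
  intros Hp. apply computable_recursive.
  eapply recursive_ext; [|apply (recursive_if 1 (fun v => nth 0 v 0 <? H)
    (fun v => lnth (nth 0 v 0) (lcode (map p (seq 0 H)))) (fun v => nth 0 v 0))].
  - intros xs _. cbv beta. set (n := nth 0 xs 0). destruct (Nat.ltb_spec n H).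
    + rewrite lnth_lcode, nth_indep with (d' := p 0) by now rewrite length_map, length_seq.
      now rewrite map_nth, seq_nth.
    + symmetry. auto.
  - solve_recursive.
  - solve_recursive.
  - apply recursive_proj.
Qed.

Lemma one_equiv_refl A : one_equiv A A.
Proof.
  exists (fun n => n). split; [exists (PProj 0); intros n; constructor|].
  split; [exists (fun n => n); auto | auto].
Qed.

Lemma one_equiv_sym A B : one_equiv A B -> one_equiv B A.
Proof.
  intros (f & Hf & (g & Hgf & Hfg) & H). exists g.
  split; [eapply computable_inverse; eauto|]. split; [exists f; auto|].
  intros m. rewrite <- (Hfg m) at 1. rewrite <- H. auto.
Qed.

Lemma one_equiv_trans A B C : one_equiv A B -> one_equiv B C -> one_equiv A C.
Proof.
  intros (f & Hf & (g & Hgf & Hfg) & H) (h & Hh & (k & Hkh & Hhk) & H').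
  exists (fun n => h (f n)). split; [now apply computable_comp|].
  split; [exists (fun n => g (k n)); split; intros n; [rewrite Hkh | rewrite Hfg]; auto|].
  intros n. now rewrite H, H'.
Qed.

Lemma count_below_le n p : count_below n p <= n.
Proof. induction n; simpl; auto. destruct (p n); simpl; lia. Qed.

Lemma count_below_const n b : count_below n (fun _ => b) = if b then n else 0.
Proof. induction n as [|n IH]; simpl; [now destruct b | rewrite IH; destruct b; simpl; lia]. Qed.

Lemma count_below_witness n v b :
  count_below n v <> count_below n (fun _ => negb b) -> exists j, j < n /\ v j = b.
Proof.
  intros Hc. apply NNPP. intros Hno. apply Hc. apply count_below_ext. intros i Hi.
  destruct (bool_dec (v i) b) as [E|E]; [exfalso; eauto | now destruct (v i), b].
Qed.

Lemma count_below_update n j b w : j < n ->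
  count_below n (fun i => if i =? j then b else w i) + Nat.b2n (w j) = count_below n w + Nat.b2n b.
Proof.
  induction n as [|n IH]; intros Hj; [lia|]. simpl. destruct (Nat.eq_dec j n) as [->|].
  - rewrite Nat.eqb_refl, (count_below_ext n _ w); [lia|].
    intros i Hi. destruct (Nat.eqb_spec i n); auto; lia.
  - destruct (Nat.eqb_spec n j); [lia|]. specialize (IH ltac:(lia)). lia.
Qed.

Definition transpose (j k n : nat) : nat := if n =? j then k else if n =? k then j else n.

Lemma transpose_involutive j k n : transpose j k (transpose j k n) = n.
Proof.
  unfold transpose. destruct (Nat.eqb_spec n j), (Nat.eqb_spec n k); subst;
    repeat match goal with |- context [?a =? ?b] => destruct (Nat.eqb_spec a b) end; lia.
Qed.

Lemma count_below_perm H (u v : nat -> bool) : count_below H u = count_below H v ->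
  exists p q, (forall n, q (p n) = n) /\ (forall n, p (q n) = n) /\
    (forall n, H <= n -> p n = n) /\ (forall i, i < H -> u i = v (p i)).
Proof.
  revert v. induction H as [|H IH]; intros v Hc.
  { exists (fun n => n), (fun n => n). repeat split; auto. intros; lia. }
  simpl in Hc. destruct (bool_dec (u H) (v H)) as [E|E].
  { destruct (IH v) as (p & q & Hqp & Hpq & Hid & Huv); [rewrite E in Hc; lia|].
    exists p, q. repeat split; auto; [intros; apply Hid; lia|].
    intros i Hi. destruct (Nat.eq_dec i H) as [->|]; [rewrite Hid; auto | apply Huv; lia]. }
  destruct (count_below_witness H v (u H)) as [j [Hj Hvj]].
  { rewrite count_below_const. pose proof (count_below_le H u).
    destruct (u H), (v H); simpl in *; try congruence; lia. }
  set (v' n := v (transpose j H n)).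
  destruct (IH v') as (p & q & Hqp & Hpq & Hid & Huv).
  { pose proof (count_below_update H j (v H) v Hj) as Hupd.
    rewrite (count_below_ext H v' (fun i => if i =? j then v H else v i)) by
      (intros i Hi; unfold v', transpose; destruct (Nat.eqb_spec i j); auto;
       destruct (Nat.eqb_spec i H); auto; lia).
    rewrite Hvj in Hupd. lia. }
  exists (fun n => transpose j H (p n)), (fun n => q (transpose j H n)). repeat split.
  - intros n. now rewrite transpose_involutive.
  - intros n. now rewrite Hpq, transpose_involutive.
  - intros n Hn. rewrite Hid by lia. unfold transpose.
    destruct (Nat.eqb_spec n j), (Nat.eqb_spec n H); lia.
  - intros i Hi. destruct (Nat.eq_dec i H) as [->|].
    + rewrite Hid by lia. unfold transpose. rewrite Nat.eqb_refl.
      destruct (Nat.eqb_spec H j); [lia | auto].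
    + rewrite Huv by lia. reflexivity.
Qed.

Lemma adjacent_from_one_equiv Z W : adjacent_from Z W -> one_equiv Z W.
Proof.
  intros (_ & rz & rw & _ & _ & _ & e & _ & c & f & Hc & Hf & Hinj & Hsurj & Htail & Hcount).
  set (H := 2 * (rz + rw)) in *.
  destruct (count_below_perm H Z (fun i => W (f i)) Hcount) as (p & q & Hqp & Hpq & Hid & Hperm).
  destruct (functional_choice _ Hsurj) as [g Hg].
  exists (fun n => f (p n)). split.
  - apply computable_comp; [now apply (computable_eventually_id p H) | now exists c].
  - split; [exists (fun m => q (g m)); split; intros n|].
    + rewrite (Hinj (g (f (p n))) (p n)) by apply Hg. apply Hqp.
    + rewrite Hpq. apply Hg.
    + intros n. destruct (Nat.lt_ge_cases n H); [auto | rewrite Hid; auto].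
Qed.

Lemma adjacent_one_equiv Z W : adjacent Z W -> one_equiv Z W.
Proof. intros [H|H]; [|apply one_equiv_sym]; now apply adjacent_from_one_equiv. Qed.

(** * Diameter two *)

Lemma count_below_tail N H u v : N <= H -> count_below N u = count_below N v ->
  (forall i, N <= i -> i < H -> u i = v i) -> count_below H u = count_below H v.
Proof.
  intros HN Hc Hi. induction H as [|H IH]; [now replace N with 0 in * by lia|].
  destruct (Nat.eq_dec N (S H)) as [<-|]; auto. simpl. rewrite IH, (Hi H); auto; lia.
Qed.

Lemma count_below_block N r b : r <= N ->
  count_below N (fun i => if i <? r then b else negb b) = if b then r else N - r.
Proof.
  induction N as [|N IH]; intros Hr; [replace r with 0 by lia; now destruct b|].
  destruct (Nat.eq_dec r (S N)) as [->|].
  - rewrite (count_below_ext _ _ (fun _ => b)), count_below_const; [destruct b; lia|].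
    intros i Hi. now rewrite (proj2 (Nat.ltb_lt i (S N)) Hi).
  - cbn [count_below]. rewrite IH by lia. destruct (Nat.ltb_spec N r); [lia|].
    destruct b; cbn [negb Nat.b2n]; lia.
Qed.

Lemma count_below_pos n p j : j < n -> p j = true -> 0 < count_below n p.
Proof.
  induction n as [|n IH]; intros Hj Hp; simpl; [lia|].
  destruct (Nat.eq_dec j n) as [<-|]; [rewrite Hp; simpl; lia | specialize (IH ltac:(lia) Hp); lia].
Qed.

Lemma count_below_lt n p j : j < n -> p j = false -> count_below n p < n.
Proof.
  induction n as [|n IH]; intros Hj Hp; simpl; [lia|].
  pose proof (count_below_le n p). destruct (Nat.eq_dec j n) as [<-|].
  - rewrite Hp. simpl. lia.
  - specialize (IH ltac:(lia) Hp). destruct (p n); simpl; lia.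
Qed.

(** Rearranging the first [N] bits of [X] into a block of the majority bit
    followed by the others makes the first flip as late as [N / 2]. *)
Lemma late_first_flip X K : (exists j, X j <> X 0) ->
  exists Z r N, first_flip Z r /\ K <= r /\ N <= 2 * r /\
    (forall n, N <= n -> Z n = X n) /\ count_below N Z = count_below N X.
Proof.
  intros [j Hj]. destruct (first_flip_exists X j Hj) as [rX [HrX _]].
  set (N := 2 * K + rX + 1). set (b := N <=? 2 * count_below N X).
  set (r := if b then count_below N X else N - count_below N X).
  assert (Hr : N <= 2 * r /\ r < N).
  { assert (H0 : exists j, j < N /\ X j = true) by (destruct (X 0) eqn:E0; [exists 0 | exists rX];
      split; try (unfold N; lia); destruct (X rX); congruence).
    assert (H1 : exists j, j < N /\ X j = false) by (destruct (X 0) eqn:E0; [exists rX | exists 0];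
      split; try (unfold N; lia); destruct (X rX); congruence).
    destruct H0 as [j0 [Hj0 E0]], H1 as [j1 [Hj1 E1]].
    pose proof (count_below_pos N X j0 Hj0 E0). pose proof (count_below_lt N X j1 Hj1 E1).
    unfold r, b. destruct (Nat.leb_spec N (2 * count_below N X)); lia. }
  exists (fun i => if i <? N then (if i <? r then b else negb b) else X i), r, N.
  split; [|split; [unfold N in *; lia | split; [lia | split]]].
  - split.
    + rewrite (proj2 (Nat.ltb_lt r N)), Nat.ltb_irrefl by lia.
      rewrite (proj2 (Nat.ltb_lt 0 N)), (proj2 (Nat.ltb_lt 0 r)) by lia. now destruct b.
    + intros i Hi. rewrite (proj2 (Nat.ltb_lt i N)), (proj2 (Nat.ltb_lt i r)) by lia.
      now rewrite (proj2 (Nat.ltb_lt 0 N)), (proj2 (Nat.ltb_lt 0 r)) by lia.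
  - intros n Hn. now rewrite (proj2 (Nat.ltb_ge n N)).
  - rewrite (count_below_ext N _ (fun i => if i <? r then b else negb b))
      by (intros i Hi; now rewrite (proj2 (Nat.ltb_lt i N))).
    rewrite count_below_block by lia. unfold r. destruct b; lia.
Qed.

Lemma one_equiv_nonconstant X Y i : one_equiv X Y -> X i <> Y i -> exists j, X j <> X 0.
Proof.
  intros (f & _ & (g & _ & Hfg) & H) Hi. apply NNPP. intros Hc. apply Hi.
  assert (Hconst : forall j, X j = X 0) by (intros j; apply NNPP; eauto).
  transitivity (X (g i)); [now rewrite Hconst, (Hconst (g i)) | now rewrite H, Hfg].
Qed.

Lemma adjacent_from_intro Z W rz rw c f N :
  (exists i, Z i <> W i) -> first_flip Z rz -> first_flip W rw -> 3 <= rz + rw ->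
  pcode c <= 2 * (rz + rw) -> N <= 2 * (rz + rw) ->
  (forall x, eval c [x] (f x)) -> (forall x x', f x = f x' -> x = x') -> (forall y, exists x, f x = y) ->
  (forall n, N <= n -> Z n = W (f n)) -> count_below N Z = count_below N (fun i => W (f i)) ->
  adjacent_from Z W.
Proof.
  intros Hd Hz Hw H3 He HN Hf Hinj Hsurj Htail Hcount.
  split; [exact Hd|]. exists rz, rw. refine (conj Hz (conj Hw (conj H3 (ex_intro _ (pcode c) (conj He _))))).
  exists c, f. refine (conj (decodes_pcode c) (conj Hf (conj Hinj (conj Hsurj (conj _ _))))).
  - intros n Hn. apply Htail. lia.
  - apply (count_below_tail N); auto.
Qed.

Lemma one_equiv_adjacent2 X Y :
  one_equiv X Y -> X = Y \/ adjacent X Y \/ exists Z, adjacent X Z /\ adjacent Z Y.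
Proof.
  intros HE. destruct (classic (forall i, X i = Y i)) as [Heq|Hne];
    [left; now apply functional_extensionality|].
  right. apply not_all_ex_not in Hne as [i0 Hi0].
  destruct (one_equiv_nonconstant X Y i0 HE Hi0) as [jX HjX].
  destruct (one_equiv_nonconstant Y X i0 (one_equiv_sym _ _ HE) (not_eq_sym Hi0)) as [jY HjY].
  destruct (first_flip_exists X jX HjX) as [rX HrX]. destruct (first_flip_exists Y jY HjY) as [rY HrY].
  destruct HE as (f & [c Hc] & (g & Hgf & Hfg) & Hxy).
  assert (Hinj : forall x x', f x = f x' -> x = x') by (intros x x' E; now rewrite <- (Hgf x), E).
  assert (Hsurj : forall y, exists x, f x = y) by (intros y; now exists (g y)).
  destruct (late_first_flip X (pcode c + pcode (PProj 0) + 3)) as (Z & r & N & Hr & HK & HN & Htail & Hcount);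
    [exists jX; auto|].
  assert (HZX : (exists i, Z i <> X i) -> adjacent_from Z X).
  { intros Hd. apply (adjacent_from_intro Z X r rX (PProj 0) (fun n => n) N); auto; try lia.
    - intros x. constructor.
    - intros y. now exists y. }
  assert (HZY : (exists i, Z i <> Y i) -> adjacent_from Z Y).
  { intros Hd. apply (adjacent_from_intro Z Y r rY c f N); auto; try lia.
    - intros n Hn. now rewrite Htail, Hxy.
    - rewrite Hcount. apply count_below_ext. auto. }
  destruct (classic (forall i, Z i = X i)) as [HZX'|HZX'].
  - left. left. replace X with Z by (now apply functional_extensionality). apply HZY.
    exists i0. now rewrite HZX'.
  - apply not_all_ex_not in HZX' as [i1 Hi1].
    destruct (classic (forall i, Z i = Y i)) as [HZY'|HZY'].
    + left. right. replace Y with Z by (now apply functional_extensionality). apply HZX. eauto.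
    + apply not_all_ex_not in HZY' as [i2 Hi2].
      right. exists Z. split; [right; apply HZX | left; apply HZY]; eauto.
Qed.

Definition evens : cantor := fun n => negb (Nat.odd n).
Definition odds : cantor := Nat.odd.
Definition flip_parity (n : nat) : nat := 2 * Nat.div2 n + Nat.b2n (negb (Nat.odd n)).

Lemma flip_parity_odd n : Nat.odd (flip_parity n) = negb (Nat.odd n).
Proof. apply odd_b2n. Qed.

Lemma flip_parity_involutive n : flip_parity (flip_parity n) = n.
Proof.
  unfold flip_parity at 1. rewrite flip_parity_odd, negb_involutive.
  unfold flip_parity. rewrite div2_b2n. symmetry. apply Nat.div2_odd.
Qed.

Lemma one_equiv_evens_odds : one_equiv evens odds.
Proof.
  exists flip_parity. split; [apply computable_recursive; unfold flip_parity; solve_recursive|].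
  split; [exists flip_parity; split; apply flip_parity_involutive|].
  intros n. unfold evens, odds. now rewrite flip_parity_odd.
Qed.

Lemma first_flip_evens : first_flip evens 1.
Proof. split; [discriminate | intros i Hi; now replace i with 0 by lia]. Qed.

Lemma first_flip_odds : first_flip odds 1.
Proof. split; [discriminate | intros i Hi; now replace i with 0 by lia]. Qed.

Lemma not_adjacent_evens_odds : ~ adjacent evens odds.
Proof.
  intros [(_ & rz & rw & Hz & Hw & H3 & _) | (_ & rz & rw & Hz & Hw & H3 & _)].
  - rewrite (first_flip_unique _ _ _ Hz first_flip_evens),
      (first_flip_unique _ _ _ Hw first_flip_odds) in H3. lia.
  - rewrite (first_flip_unique _ _ _ Hz first_flip_odds),
      (first_flip_unique _ _ _ Hw first_flip_evens) in H3. lia.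
Qed.

Lemma path_le_connected {T} (G : T -> T -> Prop) k x y : path_le G k x y -> connected G x y.
Proof.
  revert y. induction k as [|k IH]; simpl; intros y H; [subst; apply rt_refl|].
  destruct H as [H|[z [H1 H2]]]; [auto|]. eapply rt_trans; [apply IH; eauto | now apply rt_step].
Qed.

Lemma one_equiv_path2 X Y : one_equiv X Y -> path_le adjacent 2 X Y.
Proof.
  intros H. destruct (one_equiv_adjacent2 X Y H) as [->|[HXY|[Z [HXZ HZY]]]]; simpl; [auto | |].
  - left. right. exists X. auto.
  - right. exists Z. split; [right; exists X; auto | auto].
Qed.

Lemma connected_adjacent_iff X Y : connected adjacent X Y <-> one_equiv X Y.
Proof.
  split.
  - induction 1; [now apply adjacent_one_equiv | apply one_equiv_refl | eapply one_equiv_trans; eauto].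
  - intros H. apply (path_le_connected _ 2), one_equiv_path2, H.
Qed.

Theorem theorem4p1 : Pi02_graphable_diam one_equiv 2.
Proof.
  exists adjacent. split; [exact adjacent_Pi02|]. split; [split|split].
  - intros X Y [H|H]; [right|left]; exact H.
  - intros X [[[i Hi] _]|[[i Hi] _]]; auto.
  - exact connected_adjacent_iff.
  - split; [intros X Y H; now apply one_equiv_path2, connected_adjacent_iff|].
    assert (Hne : evens <> odds) by (intros E; discriminate (f_equal (fun Z => Z 0) E)).
    intros j Hj. destruct j as [|[|j]]; [exfalso..|lia];
      specialize (Hj evens odds (proj2 (connected_adjacent_iff _ _) one_equiv_evens_odds));
      simpl in Hj.
    + exact (Hne Hj).
    + destruct Hj as [E|[Z [<- H]]]; [exact (Hne E) | exact (not_adjacent_evens_odds H)].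
Qed.
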